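(* Let $f,g:[a;b]\to\mathbb{R}$ be two regulated functions which have no common points of discontinuity, and let $\xi\in[a;b]$. Let $\eta_0\ge\eta_1\ge\ldots$ and $\theta_0\ge\theta_1\ge\ldots$ be two sequences of non-negative numbers with $\eta_k\downarrow0$, $\theta_k\downarrow0$ as $k\to+\infty$; set $\eta_{-1}:=\sup_{a\le t\le b}|f(t)-f(a)|$, $\theta_{-1}:=\sup_{a\le t\le b}|g(b)-g(t)|$ and \[ S:=\sum_{k=0}^{+\infty}2^{k}\eta_{k-1}\, TV(g,[a;b],\theta_k)+\sum_{k=0}^{+\infty}2^{k}\theta_k\, TV(f,[a;b],\eta_k),\qquad \tilde S:=\sum_{k=0}^{+\infty}2^{k}\theta_{k-1}\, TV(f,[a;b],\eta_k)+\sum_{k=0}^{+\infty}2^{k}\eta_k\, TV(g,[a;b],\theta_k). \] If $S<+\infty$ or $\tilde S<+\infty$, then the Riemann–Stieltjes integral $\int_a^b f\,\mathrm{d}g$ exists and \[ \left|\int_a^b f\,\mathrm{d}g-f(\xi)\left[g(b)-g(a)\right]\right|\le 2\min\{S,\tilde S\}. \]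
   Context: A function $h:[a;b]\to\mathbb{R}$ is regulated if the one-sided finite limits $\lim_{t\to a+}h(t)$, $\lim_{t\to b-}h(t)$ exist and, for every $x\in(a;b)$, both finite limits $\lim_{t\to x-}h(t)$ and $\lim_{t\to x+}h(t)$ exist. The total variation is $TV(h,[a;b],0)=\sup_n\sup_{a\le t_1<\dots<t_n\le b}\sum_{i=2}^{n}|h(t_i)-h(t_{i-1})|$. For $\delta\ge0$, the truncated variation is $TV(h,[a;b],\delta):=\inf\{TV(u,[a;b],0):\sup_{a\le t\le b}|h(t)-u(t)|\le\delta/2\}$; for regulated $h$ and $\delta>0$ it equals $\sup_n\sup_{a\le t_1<\dots<t_n\le b}\sum_{i=2}^{n}\max\{|h(t_i)-h(t_{i-1})|-\delta,0\}$. The Riemann–Stieltjes integral $\int_a^b f\,\mathrm{d}g$ exists if the sums $\sum_i f(\nu_i)[g(a_i)-g(a_{i-1})]$ over partitions $a=a_0<\dots<a_l=b$ with tags $\nu_i\in[a_{i-1};a_i]$ converge to a common limit as the mesh tends to $0$, independently of the tags. *)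

From Stdlib Require Import Reals.
From Coquelicot Require Import Coquelicot.
Open Scope R_scope.

Definition has_right_lim (h : R -> R) (b x : R) : Prop :=
  exists l : R, forall eps, 0 < eps -> exists delta, 0 < delta /\
    forall t, x < t -> t < x + delta -> t <= b -> Rabs (h t - l) < eps.

Definition has_left_lim (h : R -> R) (a x : R) : Prop :=
  exists l : R, forall eps, 0 < eps -> exists delta, 0 < delta /\
    forall t, x - delta < t -> t < x -> a <= t -> Rabs (h t - l) < eps.

Definition regulated (h : R -> R) (a b : R) : Prop :=
  (forall x, a <= x < b -> has_right_lim h b x) /\
  (forall x, a < x <= b -> has_left_lim h a x).

Definition cont_on_at (h : R -> R) (a b x : R) : Prop :=
  forall eps, 0 < eps -> exists delta, 0 < delta /\
    forall t, a <= t <= b -> Rabs (t - x) < delta -> Rabs (h t - h x) < eps.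

Definition no_common_discontinuity (f g : R -> R) (a b : R) : Prop :=
  forall x, a <= x <= b -> cont_on_at f a b x \/ cont_on_at g a b x.

Fixpoint fsum (F : nat -> R) (n : nat) : R :=
  match n with O => 0 | S m => fsum F m + F m end.

Definition TV0 (h : R -> R) (a b : R) : Rbar :=
  Lub_Rbar (fun s => exists (n : nat) (t : nat -> R),
    a <= t O /\ t n <= b /\ (forall i, (i < n)%nat -> t i < t (S i)) /\
    s = fsum (fun i => Rabs (h (t (S i)) - h (t i))) n).

Definition TV (h : R -> R) (a b delta : R) : Rbar :=
  Glb_Rbar (fun s => exists u : R -> R,
    (forall t, a <= t <= b -> Rabs (h t - u t) <= delta / 2) /\
    TV0 u a b = Finite s).

Definition sup_dev (h : R -> R) (a b c : R) : Rbar :=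
  Lub_Rbar (fun s => exists t, a <= t <= b /\ s = Rabs (h t - h c)).

(* the shifted sequence k |-> x_{k-1}, with x_{-1} := xm1 *)
Definition shift_seq (xm1 : Rbar) (x : nat -> R) (k : nat) : Rbar :=
  match k with O => xm1 | S k' => Finite (x k') end.

Fixpoint Rbar_psum (u : nat -> Rbar) (n : nat) : Rbar :=
  match n with O => Finite 0 | S m => Rbar_plus (Rbar_psum u m) (u m) end.

Definition Rbar_series (u : nat -> Rbar) : Rbar := Sup_seq (Rbar_psum u).

Definition wsum (c : nat -> Rbar) (h : R -> R) (a b : R) (d : nat -> R) : Rbar :=
  Rbar_series (fun k => Rbar_mult (Finite (2 ^ k)) (Rbar_mult (c k) (TV h a b (d k)))).

(* Riemann–Stieltjes sum for partition p_0 = a < ... < p_l = b, tags nu_i in [p_{i-1},p_i] *)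
Definition RS_sum (f g : R -> R) (l : nat) (p nu : nat -> R) : R :=
  fsum (fun i => f (nu (S i)) * (g (p (S i)) - g (p i))) l.

Definition is_RS_integral (f g : R -> R) (a b I : R) : Prop :=
  forall eps, 0 < eps -> exists delta, 0 < delta /\
    forall (l : nat) (p nu : nat -> R),
      p O = a -> p l = b ->
      (forall i, (i < l)%nat -> p i < p (S i)) ->
      (forall i, (i < l)%nat -> p (S i) - p i < delta) ->
      (forall i, (i < l)%nat -> p i <= nu (S i) <= p (S i)) ->
      Rabs (RS_sum f g l p nu - I) < eps.

Definition nonincr_to_zero (x : nat -> R) : Prop :=
  (forall k, 0 <= x k) /\ (forall k, x (S k) <= x k) /\ is_lim_seq x 0.

From Stdlib Require Import Reals Lra Lia List ClassicalEpsilon ZArith.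
From Coquelicot Require Import Coquelicot.
Import ListNotations.
Open Scope R_scope.

(** Write the error of a Riemann-Stieltjes sum with tags [s_j] against
    [f xi (g b - g a)] as the cell sum [sum_j (f s_j - f xi) (g r_j - g r_(j-1))].  It is
    bounded by the oscillation of [f] at the tags times the variation of [g] along the
    points, and, after summation by parts, by the oscillation of [g] times the variation
    of [f] along the tags.  Approximate [f] and [g] at every level [k] by [psi_k], [u_k]
    within [eta_k / 2], [theta_k / 2] with variations close to [TV(f, eta_k)],
    [TV(g, theta_k)], and telescope: the pair [(f - psi_(k-1), u_k - u_(k-1))] costs at most
    [2 eta_(k-1) TV(g, theta_k)] by the first bound, the pair
    [(psi_k - psi_(k-1), g - u_k)] at most [theta_k TV(f, eta_k) + theta_(k-1) TV(f, eta_(k-1))]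
    by the second, which adds up to [2 S].  The two bounds are exchanged by swapping the
    roles of [f] and [g], which yields [2 S~].

    The same telescoping started at a deep level approximates [f] and [g] simultaneously
    with small cross terms; since on short intervals one of [f], [g] oscillates little
    (no common discontinuities), this gives the Cauchy criterion for Riemann-Stieltjes
    sums.  A vanishing level forces [f] or [g] to have bounded variation, and then the
    other, regulated, function is approximated by step functions. *)

Lemma fsum_ext F G n : (forall i, (i < n)%nat -> F i = G i) -> fsum F n = fsum G n.
Proof.
  induction n as [|n IH]; intros H; simpl; [reflexivity|].
  rewrite IH by (intros; apply H; lia). rewrite H by lia. reflexivity.
Qed.

Lemma fsum_plus F G n : fsum (fun i => F i + G i) n = fsum F n + fsum G n.
Proof. induction n as [|n IH]; simpl; [lra|rewrite IH; lra]. Qed.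

Lemma fsum_minus F G n : fsum (fun i => F i - G i) n = fsum F n - fsum G n.
Proof. induction n as [|n IH]; simpl; [lra|rewrite IH; lra]. Qed.

Lemma fsum_scal c F n : fsum (fun i => c * F i) n = c * fsum F n.
Proof. induction n as [|n IH]; simpl; [lra|rewrite IH; lra]. Qed.

Lemma fsum_const c n : fsum (fun _ => c) n = INR n * c.
Proof. induction n as [|n IH]; simpl fsum; [simpl; lra|rewrite IH, S_INR; lra]. Qed.

Lemma fsum_le F G n : (forall i, (i < n)%nat -> F i <= G i) -> fsum F n <= fsum G n.
Proof.
  induction n as [|n IH]; intros H; simpl; [lra|].
  assert (F n <= G n) by (apply H; lia).
  assert (fsum F n <= fsum G n) by (apply IH; intros; apply H; lia). lra.
Qed.

Lemma fsum_nonneg F n : (forall i, (i < n)%nat -> 0 <= F i) -> 0 <= fsum F n.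
Proof.
  intros H. rewrite <- (Rmult_0_r (INR n)), <- fsum_const. now apply fsum_le.
Qed.

Lemma fsum_abs F n : Rabs (fsum F n) <= fsum (fun i => Rabs (F i)) n.
Proof.
  induction n as [|n IH]; simpl; [rewrite Rabs_R0; lra|].
  eapply Rle_trans; [apply Rabs_triang|lra].
Qed.

Lemma fsum_shift F n : fsum F (S n) = F O + fsum (fun i => F (S i)) n.
Proof.
  induction n as [|n IH]; [simpl; lra|].
  change (fsum F (S (S n))) with (fsum F (S n) + F (S n)). rewrite IH. simpl. lra.
Qed.

Lemma fsum_add F n m : fsum F (n + m) = fsum F n + fsum (fun i => F (n + i)%nat) m.
Proof.
  induction m as [|m IH]; [rewrite Nat.add_0_r; simpl; lra|].
  rewrite Nat.add_succ_r. simpl. rewrite IH. lra.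
Qed.

Lemma fsum_le_n (v : nat -> R) n m :
  (forall k, 0 <= v k) -> (n <= m)%nat -> fsum v n <= fsum v m.
Proof.
  intros Hv Hnm. replace m with (n + (m - n))%nat by lia. rewrite fsum_add.
  pose proof (fsum_nonneg (fun i => v (n + i)%nat) (m - n) (fun i _ => Hv _)). lra.
Qed.

Lemma fsum_term_le (F : nat -> R) n j : (forall i, 0 <= F i) -> (j < n)%nat -> F j <= fsum F n.
Proof.
  intros HF Hj. replace n with (S j + (n - S j))%nat by lia. rewrite fsum_add.
  pose proof (fsum_nonneg (fun i => F (S j + i)%nat) (n - S j) (fun i _ => HF _)).
  pose proof (fsum_nonneg F j (fun i _ => HF i)).
  change (fsum F (S j)) with (fsum F j + F j). lra.
Qed.

Lemma fsum_telescope (a : nat -> R) n : fsum (fun i => a (S i) - a i) n = a n - a O.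
Proof. induction n as [|n IH]; simpl; [lra|rewrite IH; lra]. Qed.

Lemma fsum_swap (F : nat -> nat -> R) n m :
  fsum (fun i => fsum (fun j => F i j) m) n = fsum (fun j => fsum (fun i => F i j) n) m.
Proof.
  induction n as [|n IH]; simpl.
  - induction m as [|m IHm]; simpl; lra.
  - rewrite IH, <- fsum_plus. reflexivity.
Qed.

Lemma pow2_ge1 k : 1 <= 2 ^ k.
Proof. induction k; simpl; lra. Qed.

Lemma pow2_div_pos eps k : 0 < eps -> 0 < eps / 2 ^ k.
Proof. intros He. apply Rdiv_lt_0_compat; [exact He|pose proof (pow2_ge1 k); lra]. Qed.

Lemma pow2_div_le eps k : 0 <= eps -> eps / 2 ^ k <= eps.
Proof.
  intros He. unfold Rdiv. rewrite <- (Rmult_1_r eps) at 2. apply Rmult_le_compat_l; [lra|].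
  rewrite <- Rinv_1. apply Rinv_le_contravar; [lra|apply pow2_ge1].
Qed.

Lemma pow2_div_succ_le eps k : 0 <= eps -> eps / 2 ^ S k <= eps / 2 ^ k.
Proof.
  intros He. pose proof (pow2_ge1 k). simpl. unfold Rdiv. apply Rmult_le_compat_l; [lra|].
  apply Rinv_le_contravar; lra.
Qed.

Lemma fsum_geometric eps m n : 0 <= eps -> fsum (fun j => eps / 2 ^ (m + j)) n <= 2 * eps.
Proof.
  intros He.
  assert (Hsum : forall k, fsum (fun j => / 2 ^ j) k = 2 - 2 * / 2 ^ k).
  { induction k as [|k IH]; simpl fsum; [simpl; field|].
    rewrite IH. simpl. field. pose proof (pow2_ge1 k). lra. }
  eapply Rle_trans.
  - apply fsum_le with (G := fun j => eps * / 2 ^ j). intros j _.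
    apply Rmult_le_compat_l; [exact He|].
    apply Rinv_le_contravar; [pose proof (pow2_ge1 j); lra|apply Rle_pow; [lra|lia]].
  - rewrite fsum_scal, Hsum.
    assert (0 < / 2 ^ n) by (apply Rinv_0_lt_compat; pose proof (pow2_ge1 n); lra). nra.
Qed.

(** * Variation along finite lists and truncated variation *)

Fixpoint var_list (h : R -> R) (l : list R) : R :=
  match l with
  | x :: ((y :: _) as l') => Rabs (h y - h x) + var_list h l'
  | _ => 0
  end.

Fixpoint ordered (l : list R) : Prop :=
  match l with
  | x :: ((y :: _) as l') => x <= y /\ ordered l'
  | _ => True
  end.

Definition points_in (a b : R) (l : list R) : Prop := forall x, In x l -> a <= x <= b.

Lemma var_list_nonneg h l : 0 <= var_list h l.
Proof.
  induction l as [|x [|y l] IH]; simpl in *; [lra|lra|].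
  pose proof (Rabs_pos (h y - h x)). lra.
Qed.

Lemma var_list_ext h h' l : (forall x, h x = h' x) -> var_list h l = var_list h' l.
Proof. intros E. induction l as [|x [|y l] IH]; simpl in *; auto. rewrite IH, !E. reflexivity. Qed.

Lemma var_list_app h l1 x l2 :
  var_list h (l1 ++ x :: l2) = var_list h (l1 ++ [x]) + var_list h (x :: l2).
Proof.
  induction l1 as [|y [|z l1] IH]; [simpl; lra|simpl; lra|].
  change ((y :: z :: l1) ++ x :: l2) with (y :: (z :: l1) ++ x :: l2).
  change ((y :: z :: l1) ++ [x]) with (y :: (z :: l1) ++ [x]).
  change (var_list h (y :: (z :: l1) ++ x :: l2))
    with (Rabs (h z - h y) + var_list h ((z :: l1) ++ x :: l2)).
  change (var_list h (y :: (z :: l1) ++ [x]))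
    with (Rabs (h z - h y) + var_list h ((z :: l1) ++ [x])).
  rewrite IH. lra.
Qed.

Lemma var_list_app_ge h l1 l2 : var_list h l1 + var_list h l2 <= var_list h (l1 ++ l2).
Proof.
  destruct l2 as [|x l2]; [rewrite app_nil_r; simpl; lra|].
  rewrite var_list_app.
  assert (var_list h l1 <= var_list h (l1 ++ [x])).
  { induction l1 as [|y [|z l1] IH]; simpl in *; [lra| |lra].
    pose proof (Rabs_pos (h x - h y)). lra. }
  lra.
Qed.

Lemma var_list_sub h1 h2 l :
  var_list (fun x => h1 x - h2 x) l <= var_list h1 l + var_list h2 l.
Proof.
  induction l as [|x [|y l] IH]; simpl in *; [lra|lra|].
  assert (Rabs (h1 y - h2 y - (h1 x - h2 x)) <= Rabs (h1 y - h1 x) + Rabs (h2 y - h2 x)).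
  { replace (h1 y - h2 y - (h1 x - h2 x)) with ((h1 y - h1 x) + - (h2 y - h2 x)) by ring.
    eapply Rle_trans; [apply Rabs_triang|rewrite Rabs_Ropp; lra]. }
  lra.
Qed.

Lemma ordered_app l1 l2 :
  ordered l1 -> ordered l2 -> (forall x y, In x l1 -> In y l2 -> x <= y) ->
  ordered (l1 ++ l2).
Proof.
  induction l1 as [|x [|z l1] IH]; intros H1 H2 H; [exact H2| |].
  - destruct l2 as [|y l2]; [exact I|]. split; [apply H; simpl; auto|exact H2].
  - destruct H1 as [Hxz H1]. split; [exact Hxz|].
    apply IH; auto. intros x0 y0 Hx0 Hy0. apply H; simpl in *; tauto.
Qed.

(** [TV0] is a supremum over strictly increasing chains; removing adjacent duplicates
    turns an ordered list into such a chain with the same variation. *)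
Fixpoint dedup (l : list R) : list R :=
  match l with
  | x :: ((y :: _) as l') => if Req_EM_T x y then dedup l' else x :: dedup l'
  | _ => l
  end.

Fixpoint increasing (l : list R) : Prop :=
  match l with
  | x :: ((y :: _) as l') => x < y /\ increasing l'
  | _ => True
  end.

Lemma dedup_head x l : exists l', dedup (x :: l) = x :: l'.
Proof.
  revert x. induction l as [|y l IH]; intros x; simpl; [eauto|].
  destruct (Req_EM_T x y); [subst; apply IH|eauto].
Qed.

Lemma var_list_dedup h l : var_list h (dedup l) = var_list h l.
Proof.
  induction l as [|x [|y l] IH]; [reflexivity|reflexivity|].
  change (dedup (x :: y :: l)) with (if Req_EM_T x y then dedup (y :: l) else x :: dedup (y :: l)).
  destruct (Req_EM_T x y) as [->|_].
  - rewrite IH.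
    change (var_list h (y :: y :: l)) with (Rabs (h y - h y) + var_list h (y :: l)).
    rewrite Rminus_diag, Rabs_R0. lra.
  - destruct (dedup_head y l) as [l' Hl']. rewrite Hl' in *.
    change (Rabs (h y - h x) + var_list h (y :: l') = Rabs (h y - h x) + var_list h (y :: l)).
    rewrite IH. reflexivity.
Qed.

Lemma dedup_incl x l : In x (dedup l) -> In x l.
Proof.
  induction l as [|y [|z l] IH]; auto.
  change (In x (if Req_EM_T y z then dedup (z :: l) else y :: dedup (z :: l)) ->
          In x (y :: z :: l)).
  destruct (Req_EM_T y z); intros H; [right; auto|destruct H; [left|right]; auto].
Qed.

Lemma dedup_increasing l : ordered l -> increasing (dedup l).
Proof.
  induction l as [|x [|y l] IH]; [exact (fun _ => I)|exact (fun _ => I)|]. intros [Hxy Hl].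
  change (increasing (if Req_EM_T x y then dedup (y :: l) else x :: dedup (y :: l))).
  destruct (Req_EM_T x y); [apply IH; exact Hl|].
  destruct (dedup_head y l) as [l' Hl']. rewrite Hl' in *. split; [lra|apply IH; exact Hl].
Qed.

Lemma increasing_chain h l : increasing l -> l <> [] ->
  let n := pred (length l) in let t := fun i => nth i l 0 in
  (forall i, (i < n)%nat -> t i < t (S i)) /\
  var_list h l = fsum (fun i => Rabs (h (t (S i)) - h (t i))) n.
Proof.
  induction l as [|x [|y l] IH]; intros Hs Hne; [congruence|simpl; split; [intros; lia|reflexivity]|].
  destruct Hs as [Hxy Hs]. destruct (IH Hs) as [IH1 IH2]; [congruence|].
  cbv zeta in IH1, IH2. split.
  - intros [|i] Hi; [exact Hxy|apply (IH1 i); simpl in *; lia].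
  - change (var_list h (x :: y :: l)) with (Rabs (h y - h x) + var_list h (y :: l)).
    rewrite IH2.
    change (pred (length (x :: y :: l))) with (S (pred (length (y :: l)))).
    rewrite fsum_shift. reflexivity.
Qed.

Lemma TV0_ge0 h a b : a <= b -> Rbar_le 0 (TV0 h a b).
Proof.
  intros Hab. unfold TV0. apply Lub_Rbar_correct.
  exists O, (fun _ => a). simpl. repeat split; try lra. intros; lia.
Qed.

Lemma var_list_le_TV0 h a b l :
  a <= b -> ordered l -> points_in a b l -> Rbar_le (var_list h l) (TV0 h a b).
Proof.
  intros Hab Hs Hin. rewrite <- var_list_dedup.
  destruct (dedup l) as [|x l'] eqn:E; [apply TV0_ge0; exact Hab|].
  assert (Hst : increasing (x :: l')) by (rewrite <- E; apply dedup_increasing; exact Hs).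
  destruct (increasing_chain h (x :: l') Hst) as [H1 H2]; [congruence|].
  rewrite H2. unfold TV0. apply Lub_Rbar_correct.
  exists (pred (length (x :: l'))), (fun i => nth i (x :: l') 0).
  assert (Hpt : forall y, In y (x :: l') -> a <= y <= b)
    by (intros y Hy; apply Hin, dedup_incl; rewrite E; exact Hy).
  split; [|split; [|split; [exact H1|reflexivity]]].
  - apply Hpt. simpl. auto.
  - apply Hpt, nth_In. simpl. lia.
Qed.

Lemma TV_ge0 h a b d : a <= b -> Rbar_le 0 (TV h a b d).
Proof.
  intros Hab. apply Glb_Rbar_correct. intros s [u [_ Hu]].
  pose proof (TV0_ge0 u a b Hab) as H. rewrite Hu in H. exact H.
Qed.

Lemma TV_antimono h a b d1 d2 : d1 <= d2 -> Rbar_le (TV h a b d2) (TV h a b d1).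
Proof.
  intros Hd. apply Glb_Rbar_correct. intros s [u [Hu1 Hu2]].
  apply Glb_Rbar_correct. exists u. split; [|exact Hu2].
  intros t Ht. specialize (Hu1 t Ht). lra.
Qed.

Lemma Rbar_mult_pinfty_finite (c : Rbar) C P :
  0 <= C -> Rbar_le C c -> Rbar_mult c p_infty = Finite P -> C = 0 /\ P = 0.
Proof.
  intros HC Hc H. destruct c as [x| |]; simpl in Hc; try contradiction; [|discriminate].
  unfold Rbar_mult, Rbar_mult' in H.
  destruct (Rle_dec 0 x) as [Hx|]; [|lra].
  destruct (Rle_lt_or_eq_dec 0 x Hx); inversion H; subst; split; lra.
Qed.

Lemma Rbar_mult_lower_bound (c T : Rbar) C t P :
  0 <= C -> Rbar_le C c -> 0 <= t -> Rbar_le t T -> Rbar_mult c T = Finite P -> C * t <= P.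
Proof.
  intros HC Hc Ht HT H.
  destruct T as [y| |]; simpl in HT; try contradiction.
  - destruct c as [x| |]; simpl in Hc; try contradiction.
    + simpl in H. inversion H. nra.
    + unfold Rbar_mult, Rbar_mult' in H.
      destruct (Rle_dec 0 y) as [Hy|]; [|lra].
      destruct (Rle_lt_or_eq_dec 0 y Hy); inversion H. subst. nra.
  - destruct (Rbar_mult_pinfty_finite c C P HC Hc H). subst. lra.
Qed.

(** The excess is measured against every finite product [c * TV h a b d'] with [C <= c]
    and [d' <= d], because the weights of S may be infinite and pair a level with the
    next one. *)
Definition near_optimal (h u : R -> R) (a b d eps : R) : Prop :=
  (forall t, a <= t <= b -> Rabs (h t - u t) <= d / 2) /\
  forall (c : Rbar) (C d' P : R), 0 <= C -> Rbar_le C c -> d' <= d ->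
    Rbar_mult c (TV h a b d') = Finite P ->
    forall L, ordered L -> points_in a b L -> C * var_list u L <= P + C * eps.

Lemma near_optimal_exists h a b d eps :
  a <= b -> 0 <= d -> 0 < eps -> exists u, near_optimal h u a b d eps.
Proof.
  intros Hab Hd He. pose proof (TV_ge0 h a b d Hab) as Hge.
  destruct (TV h a b d) as [t| |] eqn:ET; simpl in Hge; [|clear Hge|contradiction].
  - assert (exists s u, (forall x, a <= x <= b -> Rabs (h x - u x) <= d / 2) /\
                        TV0 u a b = Finite s /\ s < t + eps) as [s [u [Hu1 [Hu2 Hs]]]].
    { apply NNPP. intros Hn.
      assert (Rbar_le (t + eps) (TV h a b d)).
      { apply Glb_Rbar_correct. intros s [u [Hu1 Hu2]]. simpl. apply Rnot_lt_le.
        intros Hlt. apply Hn. eauto. }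
      rewrite ET in H. simpl in H. lra. }
    exists u. split; [exact Hu1|]. intros c C d' P HC Hc Hd' HP L HL Hin.
    pose proof (var_list_le_TV0 u a b L Hab HL Hin) as HV. rewrite Hu2 in HV. simpl in HV.
    assert (C * t <= P).
    { apply (Rbar_mult_lower_bound c (TV h a b d') C t P); auto.
      rewrite <- ET. apply TV_antimono. exact Hd'. }
    assert (C * var_list u L <= C * (t + eps)) by (apply Rmult_le_compat_l; lra). lra.
  - exists h. split; [intros; rewrite Rminus_diag, Rabs_R0; lra|].
    intros c C d' P HC Hc Hd' HP L _ _.
    assert (TV h a b d' = p_infty).
    { pose proof (TV_antimono h a b d' d Hd') as H. rewrite ET in H.
      destruct (TV h a b d'); simpl in H; tauto. }
    rewrite H in HP. destruct (Rbar_mult_pinfty_finite c C P HC Hc HP). subst. lra.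
Qed.

Lemma near_optimal_seq h a b (d eps : nat -> R) :
  a <= b -> (forall k, 0 <= d k) -> (forall k, 0 < eps k) ->
  exists u : nat -> R -> R, forall k, near_optimal h (u k) a b (d k) (eps k).
Proof.
  intros Hab Hd He. apply (choice (fun k u => near_optimal h u a b (d k) (eps k))).
  intros k. apply near_optimal_exists; auto.
Qed.

Lemma Rabs_sub_close (h v : R -> R) c x y :
  Rabs (h x - v x) <= c / 2 -> Rabs (h y - v y) <= c / 2 ->
  Rabs ((h x - v x) - (h y - v y)) <= c.
Proof.
  intros Hx Hy. unfold Rminus at 1.
  eapply Rle_trans; [apply Rabs_triang|rewrite Rabs_Ropp; lra].
Qed.

Lemma near_optimal_osc h u a b d eps x y :
  near_optimal h u a b d eps -> a <= x <= b -> a <= y <= b ->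
  Rabs ((h x - u x) - (h y - u y)) <= d.
Proof. intros [H _] Hx Hy. apply Rabs_sub_close; auto. Qed.

(** A cell list [[(s_1, r_1); ...; (s_n, r_n)]] from [r_0] encodes the points
    [r_0 <= s_1 <= r_1 <= ... <= s_n <= r_n] ([cells_ok]); [cell_sum h w xi r_0 cs] is
    [sum_j (h s_j - h xi) (w r_j - w r_(j-1))], the error of the Riemann-Stieltjes sum
    with tags [s_j] against [h xi (w r_n - w r_0)]. *)
Fixpoint cell_sum (h w : R -> R) (xi r0 : R) (cs : list (R * R)) : R :=
  match cs with
  | [] => 0
  | (s, r) :: cs' => (h s - h xi) * (w r - w r0) + cell_sum h w xi r cs'
  end.

Fixpoint last_point (r0 : R) (cs : list (R * R)) : R :=
  match cs with [] => r0 | (_, r) :: cs' => last_point r cs' end.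

Fixpoint cells_ok (r0 : R) (cs : list (R * R)) : Prop :=
  match cs with [] => True | (s, r) :: cs' => r0 <= s <= r /\ cells_ok r cs' end.

Definition cell_points (r0 : R) (cs : list (R * R)) : list R := r0 :: map snd cs.

Fixpoint split_tags (xi : R) (cs : list (R * R)) : list (R * R) * list (R * R) :=
  match cs with
  | [] => ([], [])
  | (s, r) :: cs' =>
      if Rle_dec s xi then let (L, M) := split_tags xi cs' in ((s, r) :: L, M)
      else ([], cs)
  end.

Definition tag_chain (xi : R) (cs : list (R * R)) : list R :=
  map fst (fst (split_tags xi cs)) ++ xi :: map fst (snd (split_tags xi cs)).

Definition osc_le (h : R -> R) (L : list R) (C : R) : Prop :=
  forall x y, In x L -> In y L -> Rabs (h x - h y) <= C.

Lemma cell_sum_split_l h h1 h2 w xi r0 cs : (forall x, h x = h1 x + h2 x) ->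
  cell_sum h w xi r0 cs = cell_sum h1 w xi r0 cs + cell_sum h2 w xi r0 cs.
Proof.
  intros E. revert r0. induction cs as [|[s r] cs IH]; intros r0; simpl; [lra|].
  rewrite IH, !E. ring.
Qed.

Lemma cell_sum_split_r h w w1 w2 xi r0 cs : (forall x, w x = w1 x + w2 x) ->
  cell_sum h w xi r0 cs = cell_sum h w1 xi r0 cs + cell_sum h w2 xi r0 cs.
Proof.
  intros E. revert r0. induction cs as [|[s r] cs IH]; intros r0; simpl; [lra|].
  rewrite IH, !E. ring.
Qed.

Lemma cell_sum_anchor h w xi xi' r0 cs :
  cell_sum h w xi r0 cs =
  cell_sum h w xi' r0 cs + (h xi' - h xi) * (w (last_point r0 cs) - w r0).
Proof. revert r0. induction cs as [|[s r] cs IH]; intros r0; simpl; [ring|rewrite IH; ring]. Qed.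

Lemma cell_sum_app h w xi r0 L M :
  cell_sum h w xi r0 (L ++ M) = cell_sum h w xi r0 L + cell_sum h w xi (last_point r0 L) M.
Proof. revert r0. induction L as [|[s r] L IH]; intros r0; simpl; [ring|rewrite IH; ring]. Qed.

Lemma cells_ok_app r0 L M : cells_ok r0 (L ++ M) <-> cells_ok r0 L /\ cells_ok (last_point r0 L) M.
Proof. revert r0. induction L as [|[s r] L IH]; intros r0; simpl; [tauto|rewrite IH; tauto]. Qed.

Lemma cells_ok_last r0 cs : cells_ok r0 cs -> r0 <= last_point r0 cs.
Proof.
  revert r0. induction cs as [|[s r] cs IH]; intros r0; simpl; [lra|].
  intros [H1 H2]. specialize (IH r H2). lra.
Qed.

Lemma cells_ok_in r0 cs : cells_ok r0 cs ->
  forall s r, In (s, r) cs -> r0 <= s <= r /\ r <= last_point r0 cs.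
Proof.
  revert r0. induction cs as [|[s r] cs IH]; intros r0; simpl; [tauto|].
  intros [H1 H2] s' r' [E|Hin].
  - inversion E; subst. pose proof (cells_ok_last _ _ H2). lra.
  - destruct (IH r H2 s' r' Hin). lra.
Qed.

Lemma split_tags_app xi cs : fst (split_tags xi cs) ++ snd (split_tags xi cs) = cs.
Proof.
  induction cs as [|[s r] cs IH]; simpl; auto. destruct (Rle_dec s xi); [|reflexivity].
  destruct (split_tags xi cs) as [L M]. simpl in *. rewrite IH. reflexivity.
Qed.

Lemma last_point_in r0 cs : In (last_point r0 cs) (cell_points r0 cs).
Proof.
  unfold cell_points. revert r0. induction cs as [|[s r] cs IH]; intros r0; simpl; [auto|].
  right. apply IH.
Qed.

Lemma cell_points_app_l r0 L M x : In x (cell_points r0 L) -> In x (cell_points r0 (L ++ M)).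
Proof.
  unfold cell_points. intros [H|H]; [left; exact H|].
  right. rewrite map_app. apply in_or_app. auto.
Qed.

Lemma cell_points_app_r r0 L M x :
  In x (cell_points (last_point r0 L) M) -> In x (cell_points r0 (L ++ M)).
Proof.
  intros [H|H].
  - subst. destruct (last_point_in r0 L) as [H0|H0]; [left; exact H0|].
    right. rewrite map_app. apply in_or_app. auto.
  - right. rewrite map_app. apply in_or_app. auto.
Qed.

Lemma osc_le_nonneg w L C x : osc_le w L C -> In x L -> 0 <= C.
Proof. intros H Hx. specialize (H x x Hx Hx). rewrite Rminus_diag, Rabs_R0 in H. exact H. Qed.

Lemma cell_sum_bound_tags h w xi r0 cs C : 0 <= C ->
  (forall s r, In (s, r) cs -> Rabs (h s - h xi) <= C) ->
  Rabs (cell_sum h w xi r0 cs) <= C * var_list w (cell_points r0 cs).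
Proof.
  unfold cell_points. revert r0. induction cs as [|[s r] cs IH]; intros r0 HC Hb.
  - simpl. rewrite Rabs_R0. lra.
  - change (Rabs ((h s - h xi) * (w r - w r0) + cell_sum h w xi r cs) <=
            C * (Rabs (w r - w r0) + var_list w (r :: map snd cs))).
    eapply Rle_trans; [apply Rabs_triang|]. rewrite Rabs_mult.
    assert (Rabs (h s - h xi) <= C) by (apply (Hb s r); simpl; auto).
    assert (Rabs (cell_sum h w xi r cs) <= C * var_list w (r :: map snd cs))
      by (apply IH; auto; intros s0 r1 Hin; apply (Hb s0 r1); simpl; auto).
    assert (Rabs (h s - h xi) * Rabs (w r - w r0) <= C * Rabs (w r - w r0))
      by (apply Rmult_le_compat_r; auto; apply Rabs_pos).
    lra.
Qed.

(** Summation by parts, anchored at [xi]: the cells right of [xi] are handled from [xi]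
    onwards, those left of it from [xi] backwards ([cell_sum_anchor]). *)
Lemma cell_sum_bound_right h w xi r0 cs C : osc_le w (cell_points r0 cs) C ->
  Rabs (cell_sum h w xi r0 cs) <= C * var_list h (xi :: map fst cs).
Proof.
  revert xi r0. induction cs as [|[s r] cs IH]; intros xi r0 Ho.
  - pose proof (osc_le_nonneg _ _ _ r0 Ho (or_introl eq_refl)). simpl. rewrite Rabs_R0. nra.
  - assert (E : cell_sum h w xi r0 ((s, r) :: cs) =
                (h s - h xi) * (w (last_point r cs) - w r0) + cell_sum h w s r cs)
      by (simpl; rewrite (cell_sum_anchor h w xi s r cs); ring).
    rewrite E. change (var_list h (xi :: map fst ((s, r) :: cs)))
      with (Rabs (h s - h xi) + var_list h (s :: map fst cs)).
    eapply Rle_trans; [apply Rabs_triang|]. rewrite Rabs_mult.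
    assert (Rabs (w (last_point r cs) - w r0) <= C).
    { apply Ho; [apply (cell_points_app_r r0 [(s, r)] cs), last_point_in|left; reflexivity]. }
    assert (Rabs (cell_sum h w s r cs) <= C * var_list h (s :: map fst cs)).
    { apply IH. intros x y Hx Hy. apply Ho; apply (cell_points_app_r r0 [(s, r)] cs); auto. }
    assert (Rabs (h s - h xi) * Rabs (w (last_point r cs) - w r0) <= Rabs (h s - h xi) * C)
      by (apply Rmult_le_compat_l; auto; apply Rabs_pos).
    lra.
Qed.

Lemma cell_sum_bound_left h w xi r0 cs C : osc_le w (cell_points r0 cs) C ->
  Rabs (cell_sum h w xi r0 cs) <= C * var_list h (map fst cs ++ [xi]).
Proof.
  revert xi r0. induction cs as [|[s r] cs IH] using rev_ind; intros xi r0 Ho.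
  - pose proof (osc_le_nonneg _ _ _ r0 Ho (or_introl eq_refl)). simpl. rewrite Rabs_R0. nra.
  - assert (E : cell_sum h w xi r0 (cs ++ [(s, r)]) =
                cell_sum h w s r0 cs + (h s - h xi) * (w r - w r0))
      by (rewrite cell_sum_app, (cell_sum_anchor h w xi s r0 cs); simpl; ring).
    rewrite E, map_app. simpl map. rewrite <- app_assoc. simpl.
    rewrite (var_list_app h (map fst cs) s [xi]).
    change (var_list h [s; xi]) with (Rabs (h xi - h s) + 0).
    eapply Rle_trans; [apply Rabs_triang|]. rewrite Rabs_mult.
    assert (Rabs (w r - w r0) <= C).
    { apply Ho; [apply (cell_points_app_r r0 cs [(s, r)]); right; left; reflexivity|left; reflexivity]. }
    assert (Rabs (cell_sum h w s r0 cs) <= C * var_list h (map fst cs ++ [s])).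
    { apply IH. intros x y Hx Hy. apply Ho; apply cell_points_app_l; auto. }
    assert (Rabs (h s - h xi) * Rabs (w r - w r0) <= Rabs (h s - h xi) * C)
      by (apply Rmult_le_compat_l; auto; apply Rabs_pos).
    rewrite (Rabs_minus_sym (h xi) (h s)). lra.
Qed.

Lemma cell_sum_bound_points h w xi r0 cs C : osc_le w (cell_points r0 cs) C ->
  Rabs (cell_sum h w xi r0 cs) <= C * var_list h (tag_chain xi cs).
Proof.
  intros Ho. unfold tag_chain. pose proof (split_tags_app xi cs) as E.
  set (L := fst (split_tags xi cs)) in *. set (M := snd (split_tags xi cs)) in *.
  rewrite <- E in Ho. rewrite <- E at 1. rewrite var_list_app, cell_sum_app.
  eapply Rle_trans; [apply Rabs_triang|]. rewrite Rmult_plus_distr_l. apply Rplus_le_compat.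
  - apply cell_sum_bound_left. intros x y Hx Hy; apply Ho; apply cell_points_app_l; auto.
  - apply cell_sum_bound_right. intros x y Hx Hy; apply Ho; apply cell_points_app_r; auto.
Qed.

Lemma tag_chain_in xi cs : In xi (tag_chain xi cs) /\
  forall s r, In (s, r) cs -> In s (tag_chain xi cs).
Proof.
  unfold tag_chain. split; [apply in_or_app; right; left; reflexivity|].
  intros s r Hin. rewrite <- (split_tags_app xi cs) in Hin. apply in_app_or in Hin.
  apply in_or_app. destruct Hin as [Hin|Hin].
  - left. apply (in_map fst) in Hin. exact Hin.
  - right. right. apply (in_map fst) in Hin. exact Hin.
Qed.

Lemma ordered_app_cons l1 x l2 : ordered (l1 ++ [x]) -> ordered (x :: l2) -> ordered (l1 ++ x :: l2).
Proof.
  induction l1 as [|y [|z l1] IH]; intros H1 H2; [exact H2|simpl in *; tauto|].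
  destruct H1 as [H1 H3]. split; [exact H1|apply IH; auto].
Qed.

Lemma ordered_cell_points r0 cs : cells_ok r0 cs -> ordered (cell_points r0 cs).
Proof.
  unfold cell_points. revert r0. induction cs as [|[s r] cs IH]; intros r0 Hv; simpl; auto.
  destruct Hv as [H1 Hv]. split; [lra|apply IH; exact Hv].
Qed.

Lemma cell_points_in r0 cs a b :
  cells_ok r0 cs -> a <= r0 -> last_point r0 cs <= b -> points_in a b (cell_points r0 cs).
Proof.
  intros Hv Ha Hb x [Hx|Hx].
  - subst. pose proof (cells_ok_last _ _ Hv). lra.
  - apply in_map_iff in Hx. destruct Hx as [[s r] [E Hin]]. simpl in E. subst.
    destruct (cells_ok_in _ _ Hv _ _ Hin). lra.
Qed.

Lemma ordered_tags_left r0 cs xi : cells_ok r0 cs -> (forall s r, In (s, r) cs -> s <= xi) ->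
  ordered (map fst cs ++ [xi]).
Proof.
  revert r0. induction cs as [|[s r] cs IH]; intros r0 Hv Hx; simpl; auto.
  destruct Hv as [H1 Hv]. assert (s <= xi) by (apply (Hx s r); simpl; auto).
  destruct cs as [|[s' r'] cs]; simpl; [split; auto|].
  split; [simpl in Hv; lra|].
  change (ordered (map fst ((s', r') :: cs) ++ [xi])).
  apply (IH r Hv). intros s0 r0' Hin. apply (Hx s0 r0'). simpl. auto.
Qed.

Lemma ordered_tags_right r0 cs xi : cells_ok r0 cs ->
  match cs with [] => True | (s, _) :: _ => xi <= s end -> ordered (xi :: map fst cs).
Proof.
  revert r0 xi. induction cs as [|[s r] cs IH]; intros r0 xi Hv Hx; simpl; auto.
  destruct Hv as [H1 Hv]. split; [exact Hx|].
  change (ordered (s :: map fst cs)). apply (IH r s Hv).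
  destruct cs as [|[s' r'] cs]; auto. simpl in Hv. lra.
Qed.

Lemma ordered_tag_chain xi r0 cs : cells_ok r0 cs -> ordered (tag_chain xi cs).
Proof.
  intros Hv. unfold tag_chain. rewrite <- (split_tags_app xi cs) in Hv.
  apply cells_ok_app in Hv. destruct Hv as [Hv1 Hv2]. apply ordered_app_cons.
  - apply (ordered_tags_left _ _ _ Hv1).
    clear. induction cs as [|[s r] cs IH]; simpl; [tauto|].
    destruct (Rle_dec s xi) as [Hs|]; [|simpl; tauto].
    destruct (split_tags xi cs) as [L M]. simpl in *.
    intros s' r' [E|H]; [inversion E; subst; exact Hs|exact (IH s' r' H)].
  - apply (ordered_tags_right _ _ _ Hv2).
    clear. induction cs as [|[s r] cs IH]; simpl; auto.
    destruct (Rle_dec s xi); [destruct (split_tags xi cs) as [L M]; exact IH|simpl; lra].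
Qed.

Lemma tag_chain_points_in xi r0 cs a b : cells_ok r0 cs -> a <= r0 -> last_point r0 cs <= b ->
  a <= xi <= b -> points_in a b (tag_chain xi cs).
Proof.
  intros Hv Ha Hb Hxi x Hx. unfold tag_chain in Hx. rewrite <- (split_tags_app xi cs) in Hv.
  assert (Htag : forall L, cells_ok r0 L -> last_point r0 L <= b ->
                   forall s, In s (map fst L) -> a <= s <= b).
  { intros L HL HLb s Hs. apply in_map_iff in Hs. destruct Hs as [[s' r'] [E Hin]].
    simpl in E. subst. destruct (cells_ok_in _ _ HL _ _ Hin). lra. }
  rewrite <- (split_tags_app xi cs) in Hb.
  apply in_app_or in Hx. destruct Hx as [Hx|[Hx|Hx]].
  - apply (Htag _ Hv Hb). rewrite map_app. apply in_or_app. auto.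
  - subst. exact Hxi.
  - apply (Htag _ Hv Hb). rewrite map_app. apply in_or_app. auto.
Qed.

Fixpoint flat (F : nat -> list R) (n : nat) : list R :=
  match n with O => [] | S n' => flat F n' ++ F n' end.

Lemma fsum_var_list_flat h F n : fsum (fun i => var_list h (F i)) n <= var_list h (flat F n).
Proof.
  induction n as [|n IH]; simpl; [lra|].
  pose proof (var_list_app_ge h (flat F n) (F n)). lra.
Qed.

Lemma flat_in F n i x : (i < n)%nat -> In x (F i) -> In x (flat F n).
Proof.
  induction n as [|n IH]; intros Hi Hx; [lia|]. simpl. apply in_or_app.
  destruct (Nat.eq_dec i n) as [->|]; [right; exact Hx|left; apply IH; auto; lia].
Qed.

Definition partition (a b : R) (l : nat) (p : nat -> R) : Prop :=
  p O = a /\ p l = b /\ (forall i, (i < l)%nat -> p i <= p (S i)).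

Lemma partition_mono a b l p i j : partition a b l p -> (i <= j <= l)%nat -> p i <= p j.
Proof.
  intros [_ [_ H]] [Hij Hjl]. induction Hij as [|j Hij IH]; [lra|].
  specialize (H j ltac:(lia)). specialize (IH ltac:(lia)). lra.
Qed.

Lemma partition_in a b l p i : partition a b l p -> (i <= l)%nat -> a <= p i <= b.
Proof.
  intros Hp Hi. pose proof (partition_mono a b l p 0 i Hp ltac:(lia)).
  pose proof (partition_mono a b l p i l Hp ltac:(lia)).
  destruct Hp as [Ha [Hb _]]. rewrite Ha, Hb in *. lra.
Qed.

Lemma flat_ordered a b l p F : partition a b l p ->
  (forall i, (i < l)%nat -> ordered (F i) /\ points_in (p i) (p (S i)) (F i)) ->
  ordered (flat F l) /\ points_in a b (flat F l).
Proof.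
  intros Hp HF.
  assert (H : forall n, (n <= l)%nat -> ordered (flat F n) /\ points_in a (p n) (flat F n)).
  { induction n as [|n IH]; intros Hn; simpl; [split; [exact I|intros x []]|].
    destruct (IH ltac:(lia)) as [H1 H2]. destruct (HF n ltac:(lia)) as [H3 H4].
    pose proof (partition_mono a b l p n (S n) Hp ltac:(lia)).
    pose proof (partition_in a b l p n Hp ltac:(lia)).
    split.
    - apply ordered_app; auto. intros x y Hx Hy. apply H2 in Hx. apply H4 in Hy. lra.
    - intros x Hx. apply in_app_or in Hx.
      destruct Hx as [Hx|Hx]; [apply H2 in Hx|apply H4 in Hx]; lra. }
  destruct (H l ltac:(lia)) as [H1 H2]. split; [exact H1|].
  destruct Hp as [_ [Hb _]]. rewrite Hb in H2. exact H2.
Qed.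

Definition cell_family (a b : R) (l : nat) (p xi : nat -> R) (cs : nat -> list (R * R)) : Prop :=
  partition a b l p /\ forall i, (i < l)%nat ->
    cells_ok (p i) (cs i) /\ last_point (p i) (cs i) = p (S i) /\ p i <= xi i <= p (S i).

Definition family_form (l : nat) (p xi : nat -> R) (cs : nat -> list (R * R))
    (h w : R -> R) : R :=
  fsum (fun i => Rabs (cell_sum h w (xi i) (p i) (cs i))) l.

Definition family_chains (l : nat) (xi : nat -> R) (cs : nat -> list (R * R)) : list R :=
  flat (fun i => tag_chain (xi i) (cs i)) l.

Definition family_points (l : nat) (p : nat -> R) (cs : nat -> list (R * R)) : list R :=
  flat (fun i => cell_points (p i) (cs i)) l.

Lemma cell_family_lists a b l p xi cs : cell_family a b l p xi cs ->
  (ordered (family_chains l xi cs) /\ points_in a b (family_chains l xi cs)) /\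
  (ordered (family_points l p cs) /\ points_in a b (family_points l p cs)).
Proof.
  intros [Hp Hc]. split; apply flat_ordered with p; auto; intros i Hi;
    destruct (Hc i Hi) as [H1 [H2 H3]]; split.
  - exact (ordered_tag_chain _ _ _ H1).
  - rewrite <- H2. apply tag_chain_points_in with (p i); auto; lra.
  - exact (ordered_cell_points _ _ H1).
  - rewrite <- H2. apply cell_points_in; auto; lra.
Qed.

(** An abstraction of [family_form]: [LX] plays the role of the tag chains and [LY] of
    the points.  The axioms are invariant under exchanging the two arguments of [Phi]
    together with [LX] and [LY] ([admissible_transpose]); this symmetry turns the
    estimate in terms of S into the one in terms of S~. *)
Record admissible (a b : R) (Phi : (R -> R) -> (R -> R) -> R) (LX LY : list R) : Prop := {
  adm_ordered_X : ordered LX;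
  adm_in_X : points_in a b LX;
  adm_ordered_Y : ordered LY;
  adm_in_Y : points_in a b LY;
  adm_split_l : forall h h1 h2 w, (forall x, h x = h1 x + h2 x) -> Phi h w <= Phi h1 w + Phi h2 w;
  adm_split_r : forall h w w1 w2, (forall x, w x = w1 x + w2 x) -> Phi h w <= Phi h w1 + Phi h w2;
  adm_osc_l : forall h w C, osc_le h LX C -> Phi h w <= C * var_list w LY;
  adm_osc_r : forall h w C, osc_le w LY C -> Phi h w <= C * var_list h LX
}.

Lemma admissible_transpose a b Phi LX LY :
  admissible a b Phi LX LY -> admissible a b (fun h w => Phi w h) LY LX.
Proof. intros []. split; auto. Qed.

Lemma family_form_admissible a b l p xi cs : cell_family a b l p xi cs ->
  admissible a b (family_form l p xi cs) (family_chains l xi cs) (family_points l p cs).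
Proof.
  intros Hf. destruct (cell_family_lists a b l p xi cs Hf) as [[HX1 HX2] [HY1 HY2]].
  assert (Hscale : forall h (F : nat -> list R) C (T : nat -> R),
            (forall i, (i < l)%nat -> T i <= C * var_list h (F i)) ->
            (forall i, (i < l)%nat -> 0 <= C) ->
            fsum T l <= C * var_list h (flat F l)).
  { intros h F C T HT HC. destruct l as [|l'].
    - simpl. rewrite Rmult_0_r. lra.
    - eapply Rle_trans; [apply fsum_le; exact HT|]. rewrite fsum_scal.
      apply Rmult_le_compat_l; [apply (HC O); lia|apply fsum_var_list_flat]. }
  unfold family_form. split; auto.
  - intros h h1 h2 w E. rewrite <- fsum_plus. apply fsum_le. intros i _.
    rewrite (cell_sum_split_l h h1 h2) by exact E. apply Rabs_triang.
  - intros h w w1 w2 E. rewrite <- fsum_plus. apply fsum_le. intros i _.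
    rewrite (cell_sum_split_r h w w1 w2) by exact E. apply Rabs_triang.
  - intros h w C Ho. apply Hscale.
    + intros i Hi. destruct (tag_chain_in (xi i) (cs i)) as [Hxi Hs].
      apply cell_sum_bound_tags.
      * apply (osc_le_nonneg h _ C (xi i) Ho), (flat_in _ l i); auto.
      * intros s r Hin. apply Ho; apply (flat_in _ l i); eauto.
    + intros i Hi. apply (osc_le_nonneg h _ C (xi i) Ho), (flat_in _ l i); auto.
      apply tag_chain_in.
  - intros h w C Ho. apply Hscale.
    + intros i Hi. apply cell_sum_bound_points.
      intros x y Hx Hy. apply Ho; apply (flat_in _ l i); auto.
    + intros i Hi. apply (osc_le_nonneg w _ C (p i) Ho), (flat_in _ l i); auto. left. reflexivity.
Qed.

Lemma Rbar_mult_nonneg x y : Rbar_le 0 x -> Rbar_le 0 y -> Rbar_le 0 (Rbar_mult x y).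
Proof.
  intros Hx Hy. destruct x as [x| |]; destruct y as [y| |]; simpl in *; try contradiction.
  - apply Rmult_le_pos; auto.
  - unfold Rbar_mult, Rbar_mult'. destruct (Rle_dec 0 x) as [H|]; [|lra].
    destruct (Rle_lt_or_eq_dec 0 x H); simpl; lra.
  - unfold Rbar_mult, Rbar_mult'. destruct (Rle_dec 0 y) as [H|]; [|lra].
    destruct (Rle_lt_or_eq_dec 0 y H); simpl; lra.
  - exact I.
Qed.

Lemma Rbar_mult_pos_finite c X Y : 0 < c -> Rbar_mult (Finite c) X = Finite Y -> X = Finite (Y / c).
Proof.
  intros Hc H. destruct X as [x| |].
  - simpl in H. inversion H. f_equal. field. lra.
  - unfold Rbar_mult, Rbar_mult' in H. destruct (Rle_dec 0 c) as [H0|]; [|lra].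
    destruct (Rle_lt_or_eq_dec 0 c H0); [discriminate|lra].
  - unfold Rbar_mult, Rbar_mult' in H. destruct (Rle_dec 0 c) as [H0|]; [|lra].
    destruct (Rle_lt_or_eq_dec 0 c H0); [discriminate|lra].
Qed.

Lemma Rbar_psum_nonneg (u : nat -> Rbar) n :
  (forall k, Rbar_le 0 (u k)) -> Rbar_le 0 (Rbar_psum u n).
Proof.
  intros Hu. induction n as [|n IH]; [simpl; lra|].
  change (Rbar_le 0 (Rbar_plus (Rbar_psum u n) (u n))).
  replace (Finite 0) with (Rbar_plus 0 0) by (simpl; f_equal; ring).
  apply Rbar_plus_le_compat; auto.
Qed.

Lemma Rbar_psum_finite (u : nat -> Rbar) (v : nat -> R) n :
  (forall k, u k = Finite (v k)) -> Rbar_psum u n = Finite (fsum v n).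
Proof. intros H. induction n as [|n IH]; simpl; [reflexivity|rewrite IH, H; reflexivity]. Qed.

Lemma Rbar_series_finite (u : nat -> Rbar) W :
  (forall k, Rbar_le 0 (u k)) -> Rbar_series u = Finite W ->
  exists t : nat -> R, (forall k, u k = Finite (t k)) /\ (forall n, fsum t n <= W) /\
    (forall eps, 0 < eps -> exists N, W - eps < fsum t N).
Proof.
  intros Hpos HW. pose proof (Sup_seq_correct (Rbar_psum u)) as Hs.
  unfold Rbar_series in HW. rewrite HW in Hs. simpl in Hs.
  assert (Hfin : forall k, u k = Finite (real (u k))).
  { intros k. pose proof (Hpos k) as Hk.
    destruct (u k) as [x| |] eqn:E; simpl in Hk; auto; try contradiction.
    exfalso. destruct (Hs (mkposreal 1 Rlt_0_1)) as [H1 _]. specialize (H1 (S k)). simpl in H1.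
    rewrite E in H1. pose proof (Rbar_psum_nonneg u k Hpos).
    destruct (Rbar_psum u k); simpl in *; auto. }
  exists (fun k => real (u k)). split; [exact Hfin|split].
  - intros n. apply Rnot_lt_le. intros Hlt.
    assert (He : 0 < fsum (fun k => real (u k)) n - W) by lra.
    destruct (Hs (mkposreal _ He)) as [H1 _]. specialize (H1 n).
    rewrite (Rbar_psum_finite u (fun k => real (u k))) in H1 by exact Hfin. simpl in H1. lra.
  - intros eps He. destruct (Hs (mkposreal eps He)) as [_ [N HN]]. exists N.
    rewrite (Rbar_psum_finite u (fun k => real (u k))) in HN by exact Hfin. exact HN.
Qed.

(** The weights [2 ^ k] only enter through [1 <= 2 ^ k]: the argument controls the
    unweighted series [sum_k c_k TV(h, d_k)]. *)
Lemma wsum_finite_terms c h a b d W :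
  a <= b -> (forall k, Rbar_le 0 (c k)) -> wsum c h a b d = Finite W ->
  exists v : nat -> R,
    (forall k, Rbar_mult (c k) (TV h a b (d k)) = Finite (v k)) /\ (forall k, 0 <= v k) /\
    (forall n, fsum v n <= W) /\
    (forall eps, 0 < eps -> exists N, forall m n, (N <= m)%nat ->
       fsum (fun j => v (m + j)%nat) n <= eps).
Proof.
  intros Hab Hc HW. unfold wsum in HW.
  set (T := fun k => Rbar_mult (Finite (2 ^ k)) (Rbar_mult (c k) (TV h a b (d k)))) in HW.
  assert (H2 : forall k, 0 < 2 ^ k) by (intros k; pose proof (pow2_ge1 k); lra).
  assert (HT0 : forall k, Rbar_le 0 (T k)).
  { intros k. apply Rbar_mult_nonneg; [simpl; left; apply H2|].
    apply Rbar_mult_nonneg; [apply Hc|apply TV_ge0; exact Hab]. }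
  destruct (Rbar_series_finite T W HT0 HW) as [t [Ht [Hsum Hsup]]].
  assert (Ht0 : forall k, 0 <= t k) by (intros k; specialize (HT0 k); rewrite Ht in HT0; exact HT0).
  exists (fun k => t k / 2 ^ k).
  assert (Hle : forall k, t k / 2 ^ k <= t k).
  { intros k. pose proof (pow2_ge1 k). pose proof (Ht0 k).
    apply Rmult_le_reg_r with (2 ^ k); [apply H2|]. unfold Rdiv.
    rewrite Rmult_assoc, Rinv_l by (specialize (H2 k); lra). nra. }
  split; [|split; [|split]].
  - intros k. apply Rbar_mult_pos_finite; [apply H2|]. rewrite <- Ht. reflexivity.
  - intros k. apply Rdiv_le_0_compat; auto.
  - intros n. eapply Rle_trans; [apply fsum_le; intros; apply Hle|apply Hsum].
  - intros eps He. destruct (Hsup eps He) as [N HN]. exists N. intros m n Hm.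
    eapply Rle_trans; [apply fsum_le; intros; apply Hle|].
    pose proof (Hsum (m + n)%nat) as Hmn. rewrite fsum_add in Hmn.
    pose proof (fsum_le_n t N m Ht0 Hm). lra.
Qed.

Lemma sup_dev_ge h a b c t : a <= t <= b -> Rbar_le (Rabs (h t - h c)) (sup_dev h a b c).
Proof. intros Ht. apply Lub_Rbar_correct. eauto. Qed.

Lemma sup_dev_nonneg h a b c : a <= b -> Rbar_le 0 (sup_dev h a b c).
Proof.
  intros Hab. eapply Rbar_le_trans; [|apply (sup_dev_ge h a b c a); lra].
  simpl. apply Rabs_pos.
Qed.

Lemma wsum_nonneg c h a b d : Rbar_le 0 (wsum c h a b d).
Proof.
  unfold wsum, Rbar_series. eapply Rbar_le_trans; [|apply (Sup_seq_minor_le _ 0 O)].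
  simpl. lra. simpl. lra.
Qed.

(** The series S of the theorem, with the deviation [eta_(-1)] measured from [c];
    S~ is [S_series g f a b b theta eta]. *)
Definition S_series (f g : R -> R) (a b c : R) (eta theta : nat -> R) : Rbar :=
  Rbar_plus (wsum (shift_seq (sup_dev f a b c) eta) g a b theta)
            (wsum (fun k => Finite (theta k)) f a b eta).

Lemma S_series_nonneg f g a b c eta theta : Rbar_le 0 (S_series f g a b c eta theta).
Proof.
  unfold S_series. replace (Finite 0) with (Rbar_plus 0 0) by (simpl; f_equal; ring).
  apply Rbar_plus_le_compat; apply wsum_nonneg.
Qed.

Lemma S_series_finite f g a b c eta theta :
  Rbar_lt (S_series f g a b c eta theta) p_infty ->
  exists W1 W2, wsum (shift_seq (sup_dev f a b c) eta) g a b theta = Finite W1 /\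
    wsum (fun k => Finite (theta k)) f a b eta = Finite W2 /\
    S_series f g a b c eta theta = Finite (W1 + W2).
Proof.
  unfold S_series. pose proof (wsum_nonneg (shift_seq (sup_dev f a b c) eta) g a b theta).
  pose proof (wsum_nonneg (fun k => Finite (theta k)) f a b eta).
  destruct (wsum _ g a b theta) as [u| |]; destruct (wsum _ f a b eta) as [v| |];
    simpl in *; try contradiction; eauto.
Qed.

(** * The telescoping estimate *)

Lemma nonincr_le x k j : nonincr_to_zero x -> (k <= j)%nat -> x j <= x k.
Proof. intros [_ [H _]] Hkj. induction Hkj as [|j _ IH]; [lra|specialize (H j); lra]. Qed.

Lemma nonincr_eventually_le x : nonincr_to_zero x ->
  forall eps, 0 < eps -> exists N, forall n, (N <= n)%nat -> x n <= eps.
Proof.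
  intros [_ [_ Hl]] eps He. apply is_lim_seq_spec in Hl.
  destruct (Hl (mkposreal eps He)) as [N HN]. exists N. intros n Hn.
  specialize (HN n Hn). simpl in HN. rewrite Rminus_0_r in HN. apply Rabs_def2 in HN. lra.
Qed.

Lemma nonincr_mult_eventually_le x V : nonincr_to_zero x -> 0 <= V ->
  forall eps, 0 < eps -> exists N, forall n, (N <= n)%nat -> x n * V <= eps.
Proof.
  intros Hx HV eps He. destruct (nonincr_eventually_le x Hx (eps / (V + 1))) as [N HN].
  { apply Rdiv_lt_0_compat; lra. }
  exists N. intros n Hn. specialize (HN n Hn). destruct Hx as [Hx0 _]. pose proof (Hx0 n).
  apply Rle_trans with (eps / (V + 1) * (V + 1)); [nra|right; field; lra].
Qed.

Definition maxl (l : list R) : R := fold_right Rmax 0 l.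

Lemma maxl_ge x l : In x l -> x <= maxl l.
Proof.
  induction l as [|y l IH]; simpl; [tauto|]. intros [->|H]; [apply Rmax_l|].
  eapply Rle_trans; [apply IH; exact H|apply Rmax_r].
Qed.

Lemma maxl_le l M : 0 <= M -> (forall x, In x l -> x <= M) -> maxl l <= M.
Proof.
  induction l as [|y l IH]; simpl; intros H0 H; [exact H0|].
  apply Rmax_lub; [apply H; auto|apply IH; auto].
Qed.

Lemma maxl_nonneg l : 0 <= maxl l.
Proof. induction l; simpl; [lra|eapply Rle_trans; [exact IHl|apply Rmax_r]]. Qed.

Definition lag (psi : nat -> R -> R) (k : nat) : R -> R :=
  match k with O => fun _ => 0 | S k' => psi k' end.

Section Telescoping.

Variables (a b : R) (Phi : (R -> R) -> (R -> R) -> R) (LX LY : list R).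
Hypothesis Hadm : admissible a b Phi LX LY.

Lemma Phi_const_l c w : Phi (fun _ => c) w <= 0.
Proof.
  eapply Rle_trans; [apply (adm_osc_l _ _ _ _ _ Hadm) with (C := 0)|lra].
  intros x y _ _. rewrite Rminus_diag, Rabs_R0. lra.
Qed.

Lemma Phi_const_r h c : Phi h (fun _ => c) <= 0.
Proof.
  eapply Rle_trans; [apply (adm_osc_r _ _ _ _ _ Hadm) with (C := 0)|lra].
  intros x y _ _. rewrite Rminus_diag, Rabs_R0. lra.
Qed.

Lemma Phi_ext h h' w w' : (forall x, h x = h' x) -> (forall x, w x = w' x) -> Phi h w <= Phi h' w'.
Proof.
  intros Eh Ew.
  assert (Phi h w <= Phi h' w + Phi (fun _ => 0) w)
    by (apply (adm_split_l _ _ _ _ _ Hadm); intros x; rewrite Eh; ring).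
  assert (Phi h' w <= Phi h' w' + Phi h' (fun _ => 0))
    by (apply (adm_split_r _ _ _ _ _ Hadm); intros x; rewrite Ew; ring).
  pose proof (Phi_const_l 0 w). pose proof (Phi_const_r h' 0). lra.
Qed.

Variables (f g : R -> R).

Definition level_term (P U : nat -> R -> R) (k : nat) : R :=
  Phi (fun x => f x - P k x) (fun x => U (S k) x - U k x) +
  Phi (fun x => P (S k) x - P k x) (fun x => g x - U (S k) x).

Lemma Phi_telescope (P U : nat -> R -> R) m n :
  Phi (fun x => f x - P m x) (fun x => g x - U m x) <=
  fsum (fun j => level_term P U (m + j)) n +
  Phi (fun x => f x - P (m + n)%nat x) (fun x => g x - U (m + n)%nat x).
Proof.
  induction n as [|n IH]; [rewrite Nat.add_0_r; simpl; lra|].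
  rewrite Nat.add_succ_r. simpl fsum. unfold level_term at 2.
  set (k := (m + n)%nat) in *.
  assert (Phi (fun x => f x - P k x) (fun x => g x - U k x) <=
          Phi (fun x => f x - P k x) (fun x => U (S k) x - U k x) +
          Phi (fun x => f x - P k x) (fun x => g x - U (S k) x))
    by (apply (adm_split_r _ _ _ _ _ Hadm); intros; ring).
  assert (Phi (fun x => f x - P k x) (fun x => g x - U (S k) x) <=
          Phi (fun x => P (S k) x - P k x) (fun x => g x - U (S k) x) +
          Phi (fun x => f x - P (S k) x) (fun x => g x - U (S k) x))
    by (apply (adm_split_l _ _ _ _ _ Hadm); intros; ring).
  lra.
Qed.

(** [e (S k)] and [d k] are the terms of the two series of S, without the weights [2 ^ k]. *)
Variables (eta theta e d : nat -> R) (psi u : nat -> R -> R) (eps : R).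
Hypotheses (Heta : nonincr_to_zero eta) (Htheta : nonincr_to_zero theta) (Heps : 0 < eps).
Hypothesis Hpsi : forall k, near_optimal f (psi k) a b (eta k) (eps / 2 ^ k).
Hypothesis Hu : forall k, near_optimal g (u k) a b (theta k) (eps / 2 ^ k).
Hypothesis He : forall k, Rbar_mult (Finite (eta k)) (TV g a b (theta (S k))) = Finite (e (S k)).
Hypothesis Hd : forall k, Rbar_mult (Finite (theta k)) (TV f a b (eta k)) = Finite (d k).

Lemma osc_le_of_near_optimal h v dk ek L :
  near_optimal h v a b dk ek -> points_in a b L -> osc_le (fun x => h x - v x) L dk.
Proof. intros Hv HL x y Hx Hy. apply (near_optimal_osc h v a b dk ek); auto. Qed.

Lemma level_term_succ_bound k :
  level_term (lag psi) (lag u) (S k) <=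
  2 * e (S k) + d (S k) + d k + 2 * (eta O + theta O) * (eps / 2 ^ k).
Proof.
  destruct Heta as [Hen _]. destruct Htheta as [Htn [Htd _]].
  pose proof (nonincr_le eta 0 k Heta (Nat.le_0_l k)).
  pose proof (nonincr_le theta 0 (S k) Htheta (Nat.le_0_l _)).
  pose proof (pow2_div_pos eps k Heps). pose proof (pow2_div_pos eps (S k) Heps).
  pose proof (pow2_div_succ_le eps k ltac:(lra)).
  pose proof (adm_ordered_X _ _ _ _ _ Hadm). pose proof (adm_in_X _ _ _ _ _ Hadm).
  pose proof (adm_ordered_Y _ _ _ _ _ Hadm). pose proof (adm_in_Y _ _ _ _ _ Hadm).
  unfold level_term, lag.
  assert (HA : Phi (fun x => f x - psi k x) (fun x => u (S k) x - u k x) <=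
               eta k * (var_list (u (S k)) LY + var_list (u k) LY)).
  { eapply Rle_trans;
      [apply (adm_osc_l _ _ _ _ _ Hadm), (osc_le_of_near_optimal _ _ _ _ _ (Hpsi k)); auto|].
    apply Rmult_le_compat_l; [apply Hen|apply var_list_sub]. }
  assert (HB : Phi (fun x => psi (S k) x - psi k x) (fun x => g x - u (S k) x) <=
               theta (S k) * (var_list (psi (S k)) LX + var_list (psi k) LX)).
  { eapply Rle_trans;
      [apply (adm_osc_r _ _ _ _ _ Hadm), (osc_le_of_near_optimal _ _ _ _ _ (Hu (S k))); auto|].
    apply Rmult_le_compat_l; [apply Htn|apply var_list_sub]. }
  assert (eta k * var_list (u (S k)) LY <= e (S k) + eta k * (eps / 2 ^ S k))
    by (apply (proj2 (Hu (S k)) (Finite (eta k)) (eta k) (theta (S k))); simpl; auto; lra).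
  assert (eta k * var_list (u k) LY <= e (S k) + eta k * (eps / 2 ^ k))
    by (apply (proj2 (Hu k) (Finite (eta k)) (eta k) (theta (S k))); simpl; auto; lra).
  assert (theta (S k) * var_list (psi (S k)) LX <= d (S k) + theta (S k) * (eps / 2 ^ S k))
    by (apply (proj2 (Hpsi (S k)) (Finite (theta (S k))) (theta (S k)) (eta (S k))); simpl; auto; lra).
  assert (theta (S k) * var_list (psi k) LX <= d k + theta (S k) * (eps / 2 ^ k))
    by (apply (proj2 (Hpsi k) (Finite (theta k)) (theta (S k)) (eta k)); simpl; auto; lra).
  pose proof (Hen k). pose proof (Htn (S k)). nra.
Qed.

Lemma remainder_bound k :
  Phi (fun x => f x - psi k x) (fun x => g x - u k x) <=
  theta k * var_list f LX + d k + theta O * (eps / 2 ^ k).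
Proof.
  destruct Htheta as [Htn _]. pose proof (nonincr_le theta 0 k Htheta (Nat.le_0_l k)).
  pose proof (pow2_div_pos eps k Heps).
  eapply Rle_trans.
  { apply (adm_osc_r _ _ _ _ _ Hadm), (osc_le_of_near_optimal _ _ _ _ _ (Hu k)).
    exact (adm_in_Y _ _ _ _ _ Hadm). }
  assert (theta k * var_list (psi k) LX <= d k + theta k * (eps / 2 ^ k)).
  { apply (proj2 (Hpsi k) (Finite (theta k)) (theta k) (eta k)); simpl; auto; try lra.
    exact (adm_ordered_X _ _ _ _ _ Hadm). exact (adm_in_X _ _ _ _ _ Hadm). }
  assert (theta k * var_list (fun x => f x - psi k x) LX <=
          theta k * (var_list f LX + var_list (psi k) LX))
    by (apply Rmult_le_compat_l; [apply Htn|apply var_list_sub]).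
  pose proof (Htn k). nra.
Qed.

Lemma telescoped_bound m n :
  Phi (fun x => f x - psi m x) (fun x => g x - u m x) <=
  2 * fsum (fun j => e (S (m + j))) n + fsum (fun j => d (S (m + j))) n +
  fsum (fun j => d (m + j)%nat) n + d (m + n)%nat + theta (m + n)%nat * var_list f LX +
  5 * (eta O + theta O) * eps.
Proof.
  destruct Heta as [Hen _]. destruct Htheta as [Htn _].
  pose proof (Hen O). pose proof (Htn O). pose proof (pow2_div_pos eps (m + n) Heps).
  pose proof (pow2_div_le eps (m + n) ltac:(lra)).
  pose proof (Phi_telescope (lag psi) (lag u) (S m) n) as Htel. simpl in Htel.
  eapply Rle_trans; [exact Htel|].
  pose proof (remainder_bound (m + n)).
  assert (Hsum : fsum (fun j => level_term (lag psi) (lag u) (S (m + j))) n <=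
          fsum (fun j => 2 * e (S (m + j)) + d (S (m + j)) + d (m + j)%nat +
                         2 * (eta O + theta O) * (eps / 2 ^ (m + j))) n)
    by (apply fsum_le; intros j _; apply level_term_succ_bound).
  rewrite !fsum_plus, !fsum_scal in Hsum.
  pose proof (fsum_geometric eps m n ltac:(lra)). nra.
Qed.

Section Level_zero.

Variables (c0 : R) (em1 : Rbar).
Hypothesis Hem1_nonneg : Rbar_le 0 em1.
Hypothesis Hem1 : forall x, In x LX -> Rbar_le (Rabs (f x - f c0)) em1.
Hypothesis He0 : Rbar_mult em1 (TV g a b (theta O)) = Finite (e O).

Lemma level_term_zero_bound :
  level_term (lag psi) (lag u) O <=
  2 * e O + d O + (2 * maxl (map (fun x => Rabs (f x - f c0)) LX) + theta O) * eps.
Proof.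
  set (D := maxl (map (fun x => Rabs (f x - f c0)) LX)).
  assert (HD : Rbar_le D em1).
  { destruct em1 as [E| |]; simpl in *; auto.
    apply maxl_le; [exact Hem1_nonneg|]. intros y Hy. apply in_map_iff in Hy.
    destruct Hy as [x [<- Hx]]. exact (Hem1 x Hx). }
  assert (HD0 : 0 <= D) by apply maxl_nonneg.
  destruct Htheta as [Htn _]. pose proof (Htn O).
  pose proof (adm_ordered_X _ _ _ _ _ Hadm). pose proof (adm_in_X _ _ _ _ _ Hadm).
  pose proof (adm_ordered_Y _ _ _ _ _ Hadm). pose proof (adm_in_Y _ _ _ _ _ Hadm).
  unfold level_term, lag.
  assert (HA : Phi (fun x => f x - 0) (fun x => u O x - 0) <= 2 * D * var_list (u O) LY).
  { eapply Rle_trans.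
    - apply (adm_osc_l _ _ _ _ _ Hadm) with (C := 2 * D). intros x y Hx Hy.
      assert (Rabs (f x - f c0) <= D)
        by (apply maxl_ge, (in_map (fun x => Rabs (f x - f c0))); exact Hx).
      assert (Rabs (f y - f c0) <= D)
        by (apply maxl_ge, (in_map (fun x => Rabs (f x - f c0))); exact Hy).
      replace (f x - 0 - (f y - 0)) with ((f x - f c0) + - (f y - f c0)) by ring.
      eapply Rle_trans; [apply Rabs_triang|rewrite Rabs_Ropp; lra].
    - rewrite (var_list_ext _ (u O)) by (intros; ring). lra. }
  assert (HB : Phi (fun x => psi O x - 0) (fun x => g x - u O x) <= theta O * var_list (psi O) LX).
  { eapply Rle_trans;
      [apply (adm_osc_r _ _ _ _ _ Hadm), (osc_le_of_near_optimal _ _ _ _ _ (Hu O)); auto|].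
    rewrite (var_list_ext _ (psi O)) by (intros; ring). lra. }
  assert (D * var_list (u O) LY <= e O + D * (eps / 2 ^ 0))
    by (apply (proj2 (Hu O) em1 D (theta O)); auto; lra).
  assert (theta O * var_list (psi O) LX <= d O + theta O * (eps / 2 ^ 0))
    by (apply (proj2 (Hpsi O) (Finite (theta O)) (theta O) (eta O)); simpl; auto; lra).
  simpl pow in *. rewrite Rdiv_1_r in *. lra.
Qed.

Lemma Phi_main_bound W1 W2 :
  (forall n, fsum e n <= W1) -> (forall n, fsum d n <= W2) ->
  Phi f g <= 2 * (W1 + W2) +
    (2 * maxl (map (fun x => Rabs (f x - f c0)) LX) + 6 * (eta O + theta O) + 1) * eps.
Proof.
  intros HW1 HW2.
  destruct (nonincr_mult_eventually_le theta (var_list f LX) Htheta (var_list_nonneg f LX) eps Heps)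
    as [n Hn]. specialize (Hn n (le_n n)).
  assert (H0 : Phi f g <= Phi (fun x => f x - lag psi O x) (fun x => g x - lag u O x))
    by (apply Phi_ext; intros; simpl; ring).
  simpl in H0.
  pose proof (Phi_telescope (lag psi) (lag u) O 1) as H1. simpl in H1.
  pose proof (telescoped_bound O n) as H2. simpl in H2.
  change (fsum (fun j => d j) n) with (fsum d n) in H2.
  pose proof level_term_zero_bound.
  pose proof (HW1 (S n)) as He1. rewrite fsum_shift in He1.
  pose proof (HW2 (S n)) as Hd1. rewrite fsum_shift in Hd1.
  pose proof (HW2 (S n)) as Hd2. simpl in Hd2.
  destruct Htheta as [Htn _]. pose proof (Htn O). destruct Heta as [Hen _]. pose proof (Hen O).
  pose proof (maxl_nonneg (map (fun x => Rabs (f x - f c0)) LX)). nra.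
Qed.

End Level_zero.

Lemma Phi_tail_bound tau M :
  0 < tau ->
  (forall m n, (M <= m)%nat -> fsum (fun j => e (m + j)%nat) n <= tau) ->
  (forall m n, (M <= m)%nat -> fsum (fun j => d (m + j)%nat) n <= tau) ->
  forall m, (M <= m)%nat ->
  Phi (fun x => f x - psi m x) (fun x => g x - u m x) <= 6 * tau + 5 * (eta O + theta O) * eps.
Proof.
  intros Htau Het Hdt m Hm.
  destruct (nonincr_mult_eventually_le theta (var_list f LX) Htheta (var_list_nonneg f LX) tau Htau)
    as [n Hn]. specialize (Hn (m + n)%nat ltac:(lia)).
  pose proof (telescoped_bound m n).
  pose proof (Het (S m) n ltac:(lia)). pose proof (Hdt (S m) n ltac:(lia)).
  pose proof (Hdt m n Hm). pose proof (Hdt (m + n)%nat 1%nat ltac:(lia)) as Hdn.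
  simpl in *. rewrite Nat.add_0_r in Hdn. lra.
Qed.

End Telescoping.

Lemma S_series_terms f g a b c eta theta W1 W2 :
  a <= b -> nonincr_to_zero eta -> nonincr_to_zero theta ->
  wsum (shift_seq (sup_dev f a b c) eta) g a b theta = Finite W1 ->
  wsum (fun k => Finite (theta k)) f a b eta = Finite W2 ->
  exists e d : nat -> R,
    Rbar_mult (sup_dev f a b c) (TV g a b (theta O)) = Finite (e O) /\
    (forall k, Rbar_mult (Finite (eta k)) (TV g a b (theta (S k))) = Finite (e (S k))) /\
    (forall k, Rbar_mult (Finite (theta k)) (TV f a b (eta k)) = Finite (d k)) /\
    (forall n, fsum e n <= W1) /\ (forall n, fsum d n <= W2) /\
    (forall tau, 0 < tau -> exists M, forall m n, (M <= m)%nat ->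
       fsum (fun j => e (m + j)%nat) n <= tau /\ fsum (fun j => d (m + j)%nat) n <= tau).
Proof.
  intros Hab [Hen _] [Htn _] HW1 HW2.
  assert (Hc : forall k, Rbar_le 0 (shift_seq (sup_dev f a b c) eta k))
    by (intros [|k]; simpl; [apply sup_dev_nonneg; exact Hab|apply Hen]).
  destruct (wsum_finite_terms _ g a b theta W1 Hab Hc HW1) as [e [He [_ [HeS HeT]]]].
  destruct (wsum_finite_terms (fun k => Finite (theta k)) f a b eta W2 Hab Htn HW2)
    as [d [Hd [_ [HdS HdT]]]].
  exists e, d. split; [exact (He O)|]. split; [intros k; exact (He (S k))|].
  split; [exact Hd|]. split; [exact HeS|]. split; [exact HdS|].
  intros tau Htau. destruct (HeT tau Htau) as [M1 HM1]. destruct (HdT tau Htau) as [M2 HM2].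
  exists (Nat.max M1 M2). intros m n Hm. split; [apply HM1|apply HM2]; lia.
Qed.

Lemma Phi_le_twice_S f g a b c eta theta Phi LX LY s :
  a <= b -> nonincr_to_zero eta -> nonincr_to_zero theta ->
  admissible a b Phi LX LY -> S_series f g a b c eta theta = Finite s -> Phi f g <= 2 * s.
Proof.
  intros Hab Heta Htheta Hadm Hs.
  destruct (S_series_finite f g a b c eta theta) as [W1 [W2 [HW1 [HW2 E]]]];
    [rewrite Hs; exact I|].
  rewrite Hs in E. injection E as ->.
  destruct (S_series_terms f g a b c eta theta W1 W2) as [e [d [He0 [He [Hd [HeS [HdS _]]]]]]]; auto.
  set (K := 2 * maxl (map (fun x => Rabs (f x - f c)) LX) +
            6 * (eta O + theta O) + 1).
  assert (HK : 1 <= K).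
  { unfold K. pose proof (maxl_nonneg (map (fun x => Rabs (f x - f c)) LX)).
    destruct Heta as [Hen _]. destruct Htheta as [Htn _]. pose proof (Hen O). pose proof (Htn O). lra. }
  apply le_epsilon. intros eps Heps.
  assert (Heps' : 0 < eps / K) by (apply Rdiv_lt_0_compat; lra).
  assert (Hep : forall k, 0 < eps / K / 2 ^ k)
    by (intros k; apply pow2_div_pos; exact Heps').
  destruct (near_optimal_seq f a b eta (fun k => eps / K / 2 ^ k) Hab (proj1 Heta) Hep) as [psi Hpsi].
  destruct (near_optimal_seq g a b theta (fun k => eps / K / 2 ^ k) Hab (proj1 Htheta) Hep) as [u Hu].
  eapply Rle_trans.
  - eapply (Phi_main_bound a b Phi LX LY Hadm f g eta theta e d psi u (eps / K)); eauto.
    + apply sup_dev_nonneg. exact Hab.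
    + intros x Hx. apply sup_dev_ge, (adm_in_X _ _ _ _ _ Hadm). exact Hx.
  - fold K. right. field. lra.
Qed.

(** Simultaneous approximation of [f] and [g], uniformly within [x/2] and [y/2], by
    functions of variation at most [Tpsi] and [Tu], such that all cross terms are
    small; a Cauchy criterion for Riemann-Stieltjes sums follows from it. *)
Definition approximable (f g : R -> R) (a b delta : R) : Prop :=
  exists (psi u : R -> R) (x y Tpsi Tu : R),
    0 <= x /\ 0 <= y /\
    (forall t, a <= t <= b -> Rabs (f t - psi t) <= x / 2) /\
    (forall t, a <= t <= b -> Rabs (g t - u t) <= y / 2) /\
    (forall L, ordered L -> points_in a b L -> var_list psi L <= Tpsi) /\
    (forall L, ordered L -> points_in a b L -> var_list u L <= Tu) /\
    x * Tu + y * Tpsi <= delta /\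
    forall Phi LX LY, admissible a b Phi LX LY ->
      Phi (fun t => f t - psi t) (fun t => g t - u t) <= delta.

Lemma approximable_transpose f g a b delta :
  approximable g f a b delta -> approximable f g a b delta.
Proof.
  intros [psi [u [x [y [Tpsi [Tu [Hx [Hy [H1 [H2 [H3 [H4 [H5 H6]]]]]]]]]]]]].
  exists u, psi, y, x, Tu, Tpsi. repeat split; auto; [lra|].
  intros Phi LX LY Hadm. apply (H6 (fun h w => Phi w h) LY LX), admissible_transpose, Hadm.
Qed.

Lemma near_optimal_var_le h v a b d eps t :
  near_optimal h v a b d eps -> TV h a b d = Finite t ->
  forall L, ordered L -> points_in a b L -> var_list v L <= t + eps.
Proof.
  intros Hv Et L HL HLin.
  pose proof (proj2 Hv (Finite 1) 1 d t ltac:(lra) ltac:(simpl; lra) ltac:(lra)) as H.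
  rewrite Et in H. simpl in H. specialize (H ltac:(f_equal; ring) L HL HLin). lra.
Qed.

Lemma level_TV_finite f g a b eta theta e d m :
  a <= b -> nonincr_to_zero theta -> 0 < eta m -> 0 < theta m ->
  Rbar_mult (Finite (eta m)) (TV g a b (theta (S m))) = Finite (e (S m)) ->
  Rbar_mult (Finite (theta m)) (TV f a b (eta m)) = Finite (d m) ->
  TV f a b (eta m) = Finite (d m / theta m) /\
  exists tg, TV g a b (theta m) = Finite tg /\ eta m * tg <= e (S m).
Proof.
  intros Hab Htheta Hem Htm He Hd.
  split; [exact (Rbar_mult_pos_finite _ _ _ Htm Hd)|].
  pose proof (Rbar_mult_pos_finite _ _ _ Hem He) as ETg.
  pose proof (TV_antimono g a b (theta (S m)) (theta m) (proj1 (proj2 Htheta) m)) as HTg.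
  pose proof (TV_ge0 g a b (theta m) Hab) as HTg0.
  destruct (TV g a b (theta m)) as [tg| |]; rewrite ETg in HTg; simpl in HTg, HTg0; try contradiction.
  exists tg. split; [reflexivity|].
  apply (Rbar_mult_lower_bound (Finite (eta m)) (TV g a b (theta (S m))) (eta m) tg (e (S m)));
    simpl; auto; try lra. rewrite ETg. exact HTg.
Qed.

Lemma approximable_of_near_optimal f g a b psi u x y eps tf tg delta :
  near_optimal f psi a b x eps -> near_optimal g u a b y eps -> 0 <= x -> 0 <= y ->
  TV f a b x = Finite tf -> TV g a b y = Finite tg ->
  x * (tg + eps) + y * (tf + eps) <= delta ->
  (forall Phi LX LY, admissible a b Phi LX LY ->
     Phi (fun t => f t - psi t) (fun t => g t - u t) <= delta) ->
  approximable f g a b delta.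
Proof.
  intros Hpsi Hu Hx Hy Ef Eg Hd HPhi.
  exists psi, u, x, y, (tf + eps), (tg + eps). repeat split; auto.
  - apply (proj1 Hpsi).
  - apply (proj1 Hu).
  - exact (near_optimal_var_le f psi a b x eps tf Hpsi Ef).
  - exact (near_optimal_var_le g u a b y eps tg Hu Eg).
Qed.

(** The approximants are those of a level [m] beyond which the tails of both series are
    small; that all levels are positive makes the truncated variations at level [m]
    finite. *)
Lemma approximable_of_S_pos f g a b c eta theta :
  a <= b -> nonincr_to_zero eta -> nonincr_to_zero theta ->
  (forall k, 0 < eta k /\ 0 < theta k) ->
  Rbar_lt (S_series f g a b c eta theta) p_infty ->
  forall delta, 0 < delta -> approximable f g a b delta.
Proof.
  intros Hab Heta Htheta Hpos HS delta Hdelta.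
  destruct (S_series_finite f g a b c eta theta HS) as [W1 [W2 [HW1 [HW2 _]]]].
  destruct (S_series_terms f g a b c eta theta W1 W2) as [e [d [_ [He [Hd [_ [_ Htail]]]]]]]; auto.
  set (tau := delta / 12).
  destruct (Htail tau ltac:(unfold tau; lra)) as [m Hm].
  set (K := eta O + theta O).
  assert (HK : 0 < K) by (unfold K; pose proof (Hpos O); lra).
  set (eps := delta / (10 * K)).
  assert (Heps : 0 < eps) by (unfold eps; apply Rdiv_lt_0_compat; lra).
  assert (Hep : forall k, 0 < eps / 2 ^ k)
    by (intros k; apply pow2_div_pos; exact Heps).
  destruct (near_optimal_seq f a b eta (fun k => eps / 2 ^ k) Hab (proj1 Heta) Hep) as [psi Hpsi].
  destruct (near_optimal_seq g a b theta (fun k => eps / 2 ^ k) Hab (proj1 Htheta) Hep) as [u Hu].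
  destruct (Hpos m) as [Hem Htm].
  destruct (level_TV_finite f g a b eta theta e d m Hab Htheta Hem Htm (He m) (Hd m))
    as [ETf [tg [ETg Htg]]].
  apply (approximable_of_near_optimal f g a b (psi m) (u m) (eta m) (theta m) (eps / 2 ^ m)
           (d m / theta m) tg); auto; try lra.
  - assert (theta m * (d m / theta m) = d m) by (field; lra).
    destruct (Hm m 1%nat (le_n m)) as [_ Hd1]. simpl in Hd1. rewrite Nat.add_0_r in Hd1.
    destruct (Hm (S m) 1%nat ltac:(lia)) as [He1 _]. simpl in He1. rewrite Nat.add_0_r in He1.
    pose proof (nonincr_le eta 0 m Heta (Nat.le_0_l m)).
    pose proof (nonincr_le theta 0 m Htheta (Nat.le_0_l m)).
    pose proof (pow2_div_le eps m ltac:(lra)).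
    pose proof (Hep m).
    assert (HKe : (eta m + theta m) * (eps / 2 ^ m) <= K * eps)
      by (apply Rmult_le_compat; unfold K; lra).
    assert (K * eps = delta / 10) by (unfold eps; field; lra).
    rewrite Rmult_plus_distr_r in HKe. rewrite !Rmult_plus_distr_l. unfold tau in *. lra.
  - intros Phi LX LY Hadm. eapply Rle_trans.
    + apply (Phi_tail_bound a b Phi LX LY Hadm f g eta theta e d psi u eps Heta Htheta Heps
               Hpsi Hu He Hd tau m); auto; [unfold tau; lra| |]; intros; apply Hm; lia.
    + fold K. unfold eps, tau. apply Req_le. field. lra.
Qed.

(** * Regulated functions and bounded variation *)

Lemma lebesgue_number a b (rad : R -> posreal) : exists d, 0 < d /\
  forall x, a <= x <= b -> exists t, a <= t <= b /\ forall y, Rabs (y - x) < d -> Rabs (y - t) < rad t.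
Proof.
  destruct (compactness_value_1d a b
    (fun t => mkposreal (rad t / 2) ltac:(pose proof (cond_pos (rad t)); lra))) as [d Hd].
  simpl in Hd. exists d. split; [apply cond_pos|]. intros x Hx. apply NNPP. intros Hn.
  apply (Hd x Hx). intros [t [Ht [Hxt Hdt]]]. apply Hn. exists t. split; [exact Ht|].
  intros y Hy. replace (y - t) with ((y - x) + (x - t)) by ring.
  eapply Rle_lt_trans; [apply Rabs_triang|lra].
Qed.

Lemma uniform_mesh_small a b rho : a < b -> 0 < rho ->
  exists N, forall n, (N <= n)%nat -> (b - a) / INR (S n) < rho.
Proof.
  intros Hab Hr. destruct (archimed ((b - a) / rho)) as [H1 _].
  exists (Z.to_nat (up ((b - a) / rho))). intros n Hn.
  assert (0 < (b - a) / rho) by (apply Rdiv_lt_0_compat; lra).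
  assert (IZR (up ((b - a) / rho)) <= INR n).
  { rewrite <- (Z2Nat.id (up ((b - a) / rho))) by (apply le_IZR; lra).
    rewrite <- INR_IZR_INZ. apply le_INR. exact Hn. }
  assert (HN : 0 < INR (S n)) by (apply lt_0_INR; lia). rewrite S_INR in *.
  apply Rlt_div_l; [lra|]. assert ((b - a) / rho * rho = b - a) by (field; lra). nra.
Qed.

Lemma Int_part_le r1 r2 : r1 <= r2 -> (Int_part r1 <= Int_part r2)%Z.
Proof.
  intros H. destruct (base_Int_part r1). destruct (base_Int_part r2).
  apply Z.nlt_ge. intros Hlt. assert (Hz : (Int_part r2 + 1 <= Int_part r1)%Z) by lia.
  apply IZR_le in Hz. rewrite plus_IZR in Hz. simpl in Hz. lra.
Qed.

(** Index of the cell of width [w] containing [x]; the [min] puts the right end point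
    into the last of the [N] cells. *)
Definition grid_index (a w : R) (N : nat) (x : R) : nat :=
  Nat.min (N - 1) (Z.to_nat (Int_part ((x - a) / w))).

Lemma grid_index_le a w N x x' : 0 < w -> x <= x' -> (grid_index a w N x <= grid_index a w N x')%nat.
Proof.
  intros Hw H. unfold grid_index.
  assert (Hq : (x - a) / w <= (x' - a) / w)
    by (unfold Rdiv; apply Rmult_le_compat_r; [left; apply Rinv_0_lt_compat; exact Hw|lra]).
  apply Int_part_le in Hq. lia.
Qed.

Lemma grid_index_cell a b w N x : (1 <= N)%nat -> 0 < w -> INR N * w = b - a -> a <= x <= b ->
  (grid_index a w N x < N)%nat /\
  a + INR (grid_index a w N x) * w <= x <= a + INR (grid_index a w N x) * w + w.
Proof.
  intros HN1 Hw HNw Hx. set (z := (x - a) / w).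
  assert (Hz : z * w = x - a) by (unfold z; field; lra).
  assert (Hz0 : 0 <= z) by (unfold z; apply Rdiv_le_0_compat; lra).
  assert (HzN : z <= INR N) by (apply Rmult_le_reg_r with w; auto; lra).
  destruct (base_Int_part z) as [Hi1 Hi2].
  assert (Hi0 : (0 <= Int_part z)%Z).
  { assert (Hm1 : (-1 < Int_part z)%Z) by (apply lt_IZR; simpl; lra). lia. }
  assert (HiR : INR (Z.to_nat (Int_part z)) = IZR (Int_part z))
    by (rewrite INR_IZR_INZ, Z2Nat.id; auto).
  unfold grid_index. fold z.
  destruct (le_lt_dec (Z.to_nat (Int_part z)) (N - 1)) as [Hle|Hlt].
  - rewrite Nat.min_r by exact Hle. split; [lia|]. rewrite HiR. split; nra.
  - rewrite Nat.min_l by lia. split; [lia|].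
    assert (INR N <= IZR (Int_part z)) by (rewrite <- HiR; apply le_INR; lia).
    assert (z = INR N) by lra. assert (x = b) by nra. subst x.
    rewrite minus_INR by lia. change (INR 1) with 1. lra.
Qed.

Lemma var_list_piecewise (u : R -> R) (pi : R -> nat) a b B : 0 <= B ->
  (forall x y, a <= x -> x <= y -> y <= b -> (pi x <= pi y)%nat) ->
  (forall x y, a <= x <= b -> a <= y <= b -> pi x = pi y -> u x = u y) ->
  (forall x, a <= x <= b -> Rabs (u x) <= B) ->
  forall L, ordered L -> points_in a b L -> var_list u L <= 2 * B * INR (pi b).
Proof.
  intros HB0 Hm Hu HB.
  assert (Hgen : forall L x, ordered (x :: L) -> points_in a b (x :: L) ->
            var_list u (x :: L) <= 2 * B * (INR (pi b) - INR (pi x))).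
  { induction L as [|y L IH]; intros x Hs Hin.
    - assert (Hx : a <= x <= b) by (apply Hin; left; reflexivity).
      assert (INR (pi x) <= INR (pi b)) by (apply le_INR, Hm; lra). simpl. nra.
    - destruct Hs as [Hxy Hs].
      assert (Hx : a <= x <= b) by (apply Hin; left; reflexivity).
      assert (Hy : a <= y <= b) by (apply Hin; right; left; reflexivity).
      specialize (IH y Hs (fun z Hz => Hin z (or_intror Hz))).
      change (var_list u (x :: y :: L)) with (Rabs (u y - u x) + var_list u (y :: L)).
      pose proof (HB x Hx). pose proof (HB y Hy). pose proof (Rabs_pos (u x)).
      assert (Hpxy : (pi x <= pi y)%nat) by (apply Hm; lra).
      assert (Rabs (u y - u x) <= 2 * B * (INR (pi y) - INR (pi x))).
      { destruct (Nat.eq_dec (pi x) (pi y)) as [E|E].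
        - rewrite (Hu x y Hx Hy E), Rminus_diag, Rabs_R0, E. lra.
        - assert (1 <= INR (pi y) - INR (pi x)).
          { rewrite <- minus_INR by lia. apply (le_INR 1). lia. }
          assert (Rabs (u y - u x) <= 2 * B).
          { unfold Rminus. eapply Rle_trans; [apply Rabs_triang|rewrite Rabs_Ropp; lra]. }
          nra. }
      lra. }
  intros [|x L] Hs Hin.
  - simpl. pose proof (pos_INR (pi b)). nra.
  - pose proof (Hgen L x Hs Hin). pose proof (pos_INR (pi x)). nra.
Qed.

Lemma regulated_local h a b del : regulated h a b -> 0 < del -> forall t,
  exists z : posreal * (R * R),
    (forall x, a <= x <= b -> t < x < t + fst z -> Rabs (h x - snd (snd z)) < del) /\
    (forall x, a <= x <= b -> t - fst z < x < t -> Rabs (h x - fst (snd z)) < del).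
Proof.
  intros [Hr Hl] Hd t.
  assert (HR : exists (r : posreal) (R : R),
            forall x, a <= x <= b -> t < x < t + r -> Rabs (h x - R) < del).
  { destruct (Rlt_le_dec t b) as [Htb|Htb]; [destruct (Rlt_le_dec t a) as [Hta|Hta]|].
    - exists (mkposreal (a - t) ltac:(lra)), 0. intros x Hx Hx'. simpl in Hx'. lra.
    - destruct (Hr t (conj Hta Htb)) as [R HR]. destruct (HR del Hd) as [r [Hr0 Hr1]].
      exists (mkposreal r Hr0), R. intros x Hx Hx'. apply Hr1; simpl in *; lra.
    - exists (mkposreal 1 Rlt_0_1), 0. intros x Hx Hx'. lra. }
  assert (HL : exists (r : posreal) (L : R),
            forall x, a <= x <= b -> t - r < x < t -> Rabs (h x - L) < del).
  { destruct (Rle_lt_dec t a) as [Hta|Hta]; [|destruct (Rle_lt_dec t b) as [Htb|Htb]].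
    - exists (mkposreal 1 Rlt_0_1), 0. intros x Hx Hx'. lra.
    - destruct (Hl t (conj Hta Htb)) as [L HL]. destruct (HL del Hd) as [r [Hr0 Hr1]].
      exists (mkposreal r Hr0), L. intros x Hx Hx'. apply Hr1; simpl in *; lra.
    - exists (mkposreal (t - b) ltac:(lra)), 0. intros x Hx Hx'. simpl in Hx'. lra. }
  destruct HR as [r1 [R HR]]. destruct HL as [r2 [L HL]].
  exists (mkposreal (Rmin r1 r2) (Rmin_pos _ _ (cond_pos r1) (cond_pos r2)), (L, R)). simpl.
  pose proof (Rmin_l r1 r2). pose proof (Rmin_r r1 r2).
  split; intros x Hx Hx'; [apply HR|apply HL]; auto; lra.
Qed.

Definition side (c x : R) : nat :=
  if Rlt_dec x c then 0 else if Req_EM_T x c then 1 else 2.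

Lemma side_lt c x : (side c x < 3)%nat.
Proof. unfold side. destruct Rlt_dec; [lia|destruct Req_EM_T; lia]. Qed.

Lemma side_le c x x' : x <= x' -> (side c x <= side c x')%nat.
Proof.
  intros H. unfold side.
  destruct (Rlt_dec x c); [lia|]. destruct (Rlt_dec x' c); [lra|].
  destruct (Req_EM_T x c); destruct (Req_EM_T x' c); lia || lra.
Qed.

Definition grid_step (a w : R) (N : nat) (cc : nat -> R) (Lv Rv h : R -> R) (x : R) : R :=
  let c := cc (grid_index a w N x) in
  match side c x with O => Lv c | 1%nat => h c | _ => Rv c end.

Lemma grid_step_var a b w N cc Lv Rv h : (1 <= N)%nat -> 0 < w -> INR N * w = b - a ->
  exists T, forall L, ordered L -> points_in a b L -> var_list (grid_step a w N cc Lv Rv h) L <= T.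
Proof.
  intros HN Hw HNw. set (k := grid_index a w N). set (u := grid_step a w N cc Lv Rv h).
  set (B := fsum (fun j => Rabs (Lv (cc j)) + Rabs (h (cc j)) + Rabs (Rv (cc j))) N).
  assert (HB0 : forall j, 0 <= Rabs (Lv (cc j)) + Rabs (h (cc j)) + Rabs (Rv (cc j))).
  { intros j. pose proof (Rabs_pos (Lv (cc j))). pose proof (Rabs_pos (h (cc j))).
    pose proof (Rabs_pos (Rv (cc j))). lra. }
  exists (2 * B * INR (3 * k b + side (cc (k b)) b)). intros L HL HLin.
  apply (var_list_piecewise u (fun x => (3 * k x + side (cc (k x)) x)%nat) a b B);
    [apply fsum_nonneg; auto| | | | exact HL | exact HLin].
  - intros x x' _ Hxx' _. pose proof (grid_index_le a w N x x' Hw Hxx').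
    pose proof (side_lt (cc (k x)) x). pose proof (side_lt (cc (k x')) x'). fold k in H.
    destruct (Nat.eq_dec (k x) (k x')) as [E|E]; [|lia].
    rewrite <- E. pose proof (side_le (cc (k x)) x x' Hxx'). lia.
  - intros x x' _ _ E. pose proof (side_lt (cc (k x)) x). pose proof (side_lt (cc (k x')) x').
    assert (k x = k x' /\ side (cc (k x)) x = side (cc (k x')) x') as [E1 E2] by lia.
    unfold u, grid_step. fold k. rewrite E1 in *. rewrite E2. reflexivity.
  - intros x Hx. destruct (grid_index_cell a b w N x HN Hw HNw Hx) as [Hk _].
    eapply Rle_trans; [|apply (fsum_term_le _ N (k x) HB0 Hk)].
    pose proof (Rabs_pos (Lv (cc (k x)))). pose proof (Rabs_pos (h (cc (k x)))).
    pose proof (Rabs_pos (Rv (cc (k x)))). unfold u, grid_step. fold k.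
    destruct (side (cc (k x)) x) as [|[|]]; lra.
Qed.

(** The centre of each grid cell is chosen, by a Lebesgue number argument, so that the
    whole cell lies in the neighbourhood where [h] is close to its one-sided limits. *)
Lemma regulated_bv_approx h a b del : a < b -> regulated h a b -> 0 < del ->
  exists u T, (forall t, a <= t <= b -> Rabs (h t - u t) <= del / 2) /\
    (forall L, ordered L -> points_in a b L -> var_list u L <= T).
Proof.
  intros Hab Hreg Hdel.
  destruct (choice _ (regulated_local h a b (del / 2) Hreg ltac:(lra))) as [Z HZ].
  set (rad := fun t => fst (Z t)). set (Lv := fun t => fst (snd (Z t))).
  set (Rv := fun t => snd (snd (Z t))).
  destruct (lebesgue_number a b rad) as [dd [Hdd Hleb]].
  destruct (uniform_mesh_small a b dd Hab Hdd) as [n Hn]. specialize (Hn n (le_n n)).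
  set (N := S n). set (w := (b - a) / INR N).
  assert (HN0 : 0 < INR N) by (apply lt_0_INR; unfold N; lia).
  assert (Hw : 0 < w) by (unfold w; apply Rdiv_lt_0_compat; lra).
  assert (HNw : INR N * w = b - a) by (unfold w; field; lra).
  assert (Hwd : w < dd) by exact Hn.
  destruct (choice (fun (j : nat) (c : R) => (j < N)%nat -> a <= c <= b /\
      forall y, Rabs (y - (a + INR j * w)) < dd -> Rabs (y - c) < rad c)) as [cc Hcc].
  { intros j. destruct (lt_dec j N) as [Hj|Hj]; [|exists a; intros; lia].
    assert (INR j * w <= INR N * w) by (apply Rmult_le_compat_r; [lra|apply le_INR; lia]).
    destruct (Hleb (a + INR j * w)) as [c [Hc Hc']]; [pose proof (pos_INR j); nra|].
    exists c. auto. }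
  destruct (grid_step_var a b w N cc Lv Rv h ltac:(unfold N; lia) Hw HNw) as [T HT].
  exists (grid_step a w N cc Lv Rv h), T. split; [|exact HT].
  intros x Hx. set (k := grid_index a w N).
  destruct (grid_index_cell a b w N x ltac:(unfold N; lia) Hw HNw Hx) as [Hk Hcell].
  change (grid_index a w N x) with (k x) in Hk, Hcell.
  destruct (Hcc (k x) Hk) as [Hc Hxc].
  assert (Hxc' : Rabs (x - cc (k x)) < rad (cc (k x))) by (apply Hxc; apply Rabs_def1; lra).
  apply Rabs_def2 in Hxc'. destruct (HZ (cc (k x))) as [HR HL].
  unfold grid_step, side, Lv, Rv, rad in *. fold k.
  destruct (Rlt_dec x (cc (k x))); [left; apply HL; auto; lra|].
  destruct (Req_EM_T x (cc (k x))) as [E|]; cbn iota.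
  - rewrite <- E, Rminus_diag, Rabs_R0. lra.
  - left. apply HR; auto. lra.
Qed.

Lemma TV0_ext h1 h2 a b : (forall x, a <= x <= b -> h1 x = h2 x) -> TV0 h1 a b = TV0 h2 a b.
Proof.
  intros H. unfold TV0. apply Lub_Rbar_eqset. intros s.
  assert (Hin : forall n (t : nat -> R), a <= t O -> t n <= b ->
            (forall i, (i < n)%nat -> t i < t (S i)) -> forall i, (i <= n)%nat -> a <= t i <= b).
  { intros n t H0 Hn Hs.
    assert (Hm : forall i j, (i <= j <= n)%nat -> t i <= t j).
    { intros i j [Hij Hjn]. induction Hij as [|j Hij IH]; [lra|].
      specialize (Hs j ltac:(lia)). specialize (IH ltac:(lia)). lra. }
    intros i Hi. pose proof (Hm O i ltac:(lia)). pose proof (Hm i n ltac:(lia)). lra. }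
  split; intros [n [t [H1 [H2 [H3 H4]]]]]; exists n, t; repeat split; auto; rewrite H4;
    apply fsum_ext; intros i Hi; rewrite !H by (apply (Hin n t); auto; lia); reflexivity.
Qed.

Definition BV (h : R -> R) (a b : R) : Prop := exists V, TV0 h a b = Finite V.

Lemma BV_const_on h a b c : a <= b -> (forall x, a <= x <= b -> h x = c) -> BV h a b.
Proof.
  intros Hab H. exists 0. rewrite (TV0_ext h (fun _ => c) a b H). unfold TV0.
  apply is_lub_Rbar_unique. split.
  - intros s [n [t [_ [_ [_ ->]]]]]. simpl. rewrite (fsum_ext _ (fun _ => 0)).
    + rewrite fsum_const. lra.
    + intros; rewrite Rminus_diag, Rabs_R0; reflexivity.
  - intros M HM. apply HM. exists O, (fun _ => a). simpl. repeat split; try lra. intros; lia.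
Qed.

(** [TV h a b 0] is [TV0 h a b]: the only admissible competitor is [h] itself. *)
Lemma BV_of_TV_zero h a b : TV h a b 0 <> p_infty -> BV h a b.
Proof.
  intros Hne. apply NNPP. intros Hn. apply Hne.
  assert (H : Rbar_le p_infty (TV h a b 0)).
  { apply Glb_Rbar_correct. intros s [u [Hu1 Hu2]]. exfalso. apply Hn. exists s.
    rewrite <- Hu2. apply TV0_ext. intros x Hx. specialize (Hu1 x Hx).
    replace (0 / 2) with 0 in Hu1 by field.
    assert (Hz : Rabs (h x - u x) = 0) by (pose proof (Rabs_pos (h x - u x)); lra).
    apply Rabs_eq_0 in Hz. lra. }
  destruct (TV h a b 0); simpl in H; tauto.
Qed.

Lemma BV_of_mult_finite X h a b P : Rbar_lt 0 X -> Rbar_mult X (TV h a b 0) = Finite P -> BV h a b.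
Proof.
  intros HX H. apply BV_of_TV_zero. intros E. rewrite E in H.
  destruct X as [x| |]; simpl in HX; try contradiction; [|discriminate].
  unfold Rbar_mult, Rbar_mult' in H. destruct (Rle_dec 0 x) as [Hx|]; [|lra].
  destruct (Rle_lt_or_eq_dec 0 x Hx); [discriminate|lra].
Qed.

(** If some level vanishes, the finiteness of the corresponding term of S forces [f] or
    [g] to be of bounded variation; at level [0] the weight is [sup_dev f a b c], whose
    vanishing makes [f] constant. *)
Lemma levels_positive_or_BV f g a b c eta theta e d :
  a <= b -> (forall k, 0 <= eta k) -> (forall k, 0 <= theta k) ->
  Rbar_mult (sup_dev f a b c) (TV g a b (theta O)) = Finite (e O) ->
  (forall k, Rbar_mult (Finite (eta k)) (TV g a b (theta (S k))) = Finite (e (S k))) ->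
  (forall k, Rbar_mult (Finite (theta k)) (TV f a b (eta k)) = Finite (d k)) ->
  (forall k, 0 < eta k /\ 0 < theta k) \/ BV f a b \/ BV g a b.
Proof.
  intros Hab Hen Htn He0 He Hd.
  assert (Hz : forall k, theta k = 0 -> BV f a b \/ BV g a b).
  { induction k as [|k IH]; intros Hk.
    - rewrite Hk in He0. pose proof (sup_dev_nonneg f a b c Hab) as Hs.
      destruct (sup_dev f a b c) as [E| |] eqn:ES; simpl in Hs; try contradiction.
      + destruct (Req_dec E 0) as [E0|E0].
        * left. apply (BV_const_on f a b (f c) Hab). intros x Hx.
          pose proof (sup_dev_ge f a b c x Hx) as H. rewrite ES, E0 in H. simpl in H.
          pose proof (Rabs_pos (f x - f c)).
          assert (Hz : Rabs (f x - f c) = 0) by lra. apply Rabs_eq_0 in Hz. lra.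
        * right. apply (BV_of_mult_finite (Finite E) g a b (e O)); auto. simpl. lra.
      + right. apply (BV_of_mult_finite p_infty g a b (e O)); [exact I|exact He0].
    - specialize (He k). rewrite Hk in He.
      destruct (Req_dec (eta k) 0) as [E|E].
      + specialize (Hd k). rewrite E in Hd. destruct (Req_dec (theta k) 0) as [E'|E'].
        * apply IH. exact E'.
        * left. apply (BV_of_mult_finite (Finite (theta k)) f a b (d k)); auto.
          simpl. specialize (Htn k). lra.
      + right. apply (BV_of_mult_finite (Finite (eta k)) g a b (e (S k))); auto.
        simpl. specialize (Hen k). lra. }
  destruct (classic (forall k, 0 < eta k /\ 0 < theta k)) as [H|H]; [left; exact H|right].
  apply not_all_ex_not in H. destruct H as [k Hk].
  destruct (Req_dec (theta k) 0) as [E|E]; [apply (Hz k E)|].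
  assert (Hek : eta k = 0)
    by (specialize (Hen k); specialize (Htn k); apply NNPP; intros Hn; apply Hk; split; lra).
  specialize (Hd k). rewrite Hek in Hd. left.
  apply (BV_of_mult_finite (Finite (theta k)) f a b (d k)); auto. simpl. specialize (Htn k). lra.
Qed.

Lemma approximable_of_BV f g a b delta :
  a < b -> regulated g a b -> BV f a b -> 0 < delta -> approximable f g a b delta.
Proof.
  intros Hab Hg [V HV] Hd.
  assert (HV0 : 0 <= V) by (pose proof (TV0_ge0 f a b ltac:(lra)) as H; rewrite HV in H; exact H).
  set (y := delta / (V + 1)).
  assert (Hy : 0 < y) by (unfold y; apply Rdiv_lt_0_compat; lra).
  destruct (regulated_bv_approx g a b y Hab Hg Hy) as [u [Tu [Hu1 Hu2]]].
  exists f, u, 0, y, V, Tu. repeat split; auto; try lra.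
  - intros; rewrite Rminus_diag, Rabs_R0; lra.
  - intros L H1 H2. pose proof (var_list_le_TV0 f a b L ltac:(lra) H1 H2) as H.
    rewrite HV in H. exact H.
  - rewrite Rmult_0_l, Rplus_0_l.
    apply Rle_trans with (y * (V + 1)); [apply Rmult_le_compat_l; lra|].
    right. unfold y. field. lra.
  - intros Phi LX LY Hadm. eapply Rle_trans; [apply (adm_osc_l _ _ _ _ _ Hadm) with (C := 0)|].
    + intros x x' _ _. rewrite !Rminus_diag, Rabs_R0. lra.
    + lra.
Qed.

Lemma approximable_of_S_finite f g a b c eta theta :
  a < b -> regulated f a b -> regulated g a b ->
  nonincr_to_zero eta -> nonincr_to_zero theta ->
  Rbar_lt (S_series f g a b c eta theta) p_infty ->
  forall delta, 0 < delta -> approximable f g a b delta.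
Proof.
  intros Hab Hf Hg Heta Htheta HS delta Hdelta.
  destruct (S_series_finite f g a b c eta theta HS) as [W1 [W2 [HW1 [HW2 _]]]].
  destruct (S_series_terms f g a b c eta theta W1 W2) as [e [d [He0 [He [Hd _]]]]]; auto; try lra.
  destruct (levels_positive_or_BV f g a b c eta theta e d) as [Hpos|[HBV|HBV]];
    auto; try lra; try apply Heta; try apply Htheta.
  - apply (approximable_of_S_pos f g a b c eta theta); auto. lra.
  - apply approximable_of_BV; auto.
  - apply approximable_transpose, approximable_of_BV; auto.
Qed.

(** * Cauchy criterion for Riemann-Stieltjes sums *)

Definition osc_on (h : R -> R) (x0 x1 C : R) : Prop :=
  forall x y, x0 <= x <= x1 -> x0 <= y <= x1 -> Rabs (h x - h y) <= C.

Lemma small_oscillation f g a b : no_common_discontinuity f g a b ->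
  forall eps, 0 < eps -> exists rho, 0 < rho /\ forall x0 x1, a <= x0 -> x0 <= x1 -> x1 <= b ->
    x1 - x0 < rho -> osc_on f x0 x1 eps \/ osc_on g x0 x1 eps.
Proof.
  intros Hnc eps He.
  destruct (choice (fun t (r : posreal) => a <= t <= b ->
    (forall x, a <= x <= b -> Rabs (x - t) < r -> Rabs (f x - f t) < eps / 2) \/
    (forall x, a <= x <= b -> Rabs (x - t) < r -> Rabs (g x - g t) < eps / 2))) as [rad Hrad].
  { intros t. destruct (classic (a <= t <= b)) as [Ht|Ht].
    - destruct (Hnc t Ht) as [Hc|Hc]; destruct (Hc (eps / 2) ltac:(lra)) as [r [Hr0 Hr]];
        exists (mkposreal r Hr0); intros _; [left|right]; intros x Hx Hxt; apply Hr; auto.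
    - exists (mkposreal 1 Rlt_0_1). intros; contradiction. }
  destruct (lebesgue_number a b rad) as [rho [Hrho Hleb]]. exists rho. split; [exact Hrho|].
  intros x0 x1 H0 H01 H1 Hlen. destruct (Hleb x0 ltac:(lra)) as [t [Ht Hball]].
  assert (Hx : forall x, x0 <= x <= x1 -> Rabs (x - t) < rad t)
    by (intros x Hx; apply Hball; rewrite Rabs_right; lra).
  assert (Htri : forall h : R -> R, (forall x, a <= x <= b -> Rabs (x - t) < rad t ->
                   Rabs (h x - h t) < eps / 2) -> osc_on h x0 x1 eps).
  { intros h Hh x y Hx' Hy'.
    pose proof (Hh x ltac:(lra) (Hx x Hx')). pose proof (Hh y ltac:(lra) (Hx y Hy')).
    replace (h x - h y) with ((h x - h t) + - (h y - h t)) by ring.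
    eapply Rle_trans; [apply Rabs_triang|rewrite Rabs_Ropp; lra]. }
  destruct (Hrad t Ht) as [Hf|Hg]; [left|right]; apply Htri; assumption.
Qed.

(** The cell sum is split so that the function with small oscillation on the cell is
    paired with an approximant of bounded variation. *)
Lemma cell_sum_split_bound f g psi u x y eps0 x0 x1 xi cs :
  cells_ok x0 cs -> last_point x0 cs = x1 -> x0 <= xi <= x1 -> 0 <= eps0 ->
  (forall t, x0 <= t <= x1 -> Rabs (f t - psi t) <= x / 2) ->
  (forall t, x0 <= t <= x1 -> Rabs (g t - u t) <= y / 2) ->
  osc_on f x0 x1 eps0 \/ osc_on g x0 x1 eps0 ->
  Rabs (cell_sum f g xi x0 cs) <=
  (eps0 + x) * var_list u (cell_points x0 cs) + (eps0 + y) * var_list psi (tag_chain xi cs) +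
  Rabs (cell_sum (fun t => f t - psi t) (fun t => g t - u t) xi x0 cs).
Proof.
  intros Hv Hlast Hxi He0 Hpsi Hu Hosc.
  set (F := fun t => f t - psi t). set (G := fun t => g t - u t).
  pose proof (var_list_nonneg u (cell_points x0 cs)).
  pose proof (var_list_nonneg psi (tag_chain xi cs)).
  assert (Htag : forall s r, In (s, r) cs -> x0 <= s <= x1)
    by (intros s r Hsr; destruct (cells_ok_in _ _ Hv _ _ Hsr); rewrite Hlast in *; lra).
  assert (Hpts : forall z, In z (cell_points x0 cs) -> x0 <= z <= x1)
    by (intros z Hz; apply (cell_points_in x0 cs); auto; lra).
  assert (HoscF : forall z z', x0 <= z <= x1 -> x0 <= z' <= x1 -> Rabs (F z - F z') <= x)
    by (intros z z' Hz Hz'; apply Rabs_sub_close; auto).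
  assert (HoscG : osc_le G (cell_points x0 cs) y)
    by (intros z z' Hz Hz'; apply Rabs_sub_close; apply Hu, Hpts; auto).
  assert (Hx : 0 <= x)
    by (specialize (HoscF xi xi Hxi Hxi); rewrite Rminus_diag, Rabs_R0 in HoscF; lra).
  assert (Hy : 0 <= y) by (apply (osc_le_nonneg G _ y x0 HoscG); left; reflexivity).
  destruct Hosc as [Hof|Hog].
  - rewrite (cell_sum_split_r f g u G) by (intros; unfold G; ring).
    rewrite (cell_sum_split_l f psi F G) by (intros; unfold F; ring).
    assert (Rabs (cell_sum f u xi x0 cs) <= eps0 * var_list u (cell_points x0 cs))
      by (apply cell_sum_bound_tags; auto; intros s r Hsr; apply Hof; [apply (Htag s r Hsr)|exact Hxi]).
    assert (Rabs (cell_sum psi G xi x0 cs) <= y * var_list psi (tag_chain xi cs))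
      by (apply cell_sum_bound_points; exact HoscG).
    pose proof (Rabs_triang (cell_sum f u xi x0 cs) (cell_sum psi G xi x0 cs + cell_sum F G xi x0 cs)).
    pose proof (Rabs_triang (cell_sum psi G xi x0 cs) (cell_sum F G xi x0 cs)).
    rewrite Rplus_assoc. nra.
  - rewrite (cell_sum_split_l f psi F g) by (intros; unfold F; ring).
    rewrite (cell_sum_split_r F g u G) by (intros; unfold G; ring).
    assert (Rabs (cell_sum psi g xi x0 cs) <= eps0 * var_list psi (tag_chain xi cs))
      by (apply cell_sum_bound_points; intros z z' Hz Hz'; apply Hog; auto).
    assert (Rabs (cell_sum F u xi x0 cs) <= x * var_list u (cell_points x0 cs))
      by (apply cell_sum_bound_tags; auto; intros s r Hsr; apply HoscF; [apply (Htag s r Hsr)|exact Hxi]).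
    pose proof (Rabs_triang (cell_sum psi g xi x0 cs) (cell_sum F u xi x0 cs + cell_sum F G xi x0 cs)).
    pose proof (Rabs_triang (cell_sum F u xi x0 cs) (cell_sum F G xi x0 cs)).
    rewrite Rplus_assoc. nra.
Qed.

Lemma family_form_split f g a b psi u x y Tpsi Tu eps0 rho l p xi cs :
  0 <= x -> 0 <= y -> 0 <= eps0 ->
  (forall t, a <= t <= b -> Rabs (f t - psi t) <= x / 2) ->
  (forall t, a <= t <= b -> Rabs (g t - u t) <= y / 2) ->
  (forall L, ordered L -> points_in a b L -> var_list psi L <= Tpsi) ->
  (forall L, ordered L -> points_in a b L -> var_list u L <= Tu) ->
  (forall x0 x1, a <= x0 -> x0 <= x1 -> x1 <= b -> x1 - x0 < rho ->
     osc_on f x0 x1 eps0 \/ osc_on g x0 x1 eps0) ->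
  cell_family a b l p xi cs -> (forall i, (i < l)%nat -> p (S i) - p i < rho) ->
  family_form l p xi cs f g <=
  (eps0 + x) * Tu + (eps0 + y) * Tpsi +
  family_form l p xi cs (fun t => f t - psi t) (fun t => g t - u t).
Proof.
  intros Hx Hy He0 Hpsi Hu HTp HTu Hosc Hf Hrho.
  destruct (cell_family_lists a b l p xi cs Hf) as [[HX1 HX2] [HY1 HY2]].
  destruct Hf as [Hp Hc].
  unfold family_form. eapply Rle_trans.
  { apply fsum_le. intros i Hi. destruct (Hc i Hi) as [Hv [Hlast Hxi]].
    pose proof (partition_in a b l p i Hp ltac:(lia)).
    pose proof (partition_in a b l p (S i) Hp ltac:(lia)).
    apply (cell_sum_split_bound f g psi u x y eps0 (p i) (p (S i))); auto.
    - intros t Ht. apply Hpsi. lra.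
    - intros t Ht. apply Hu. lra.
    - apply Hosc; [lra|exact (proj2 (proj2 Hp) i Hi)|lra|exact (Hrho i Hi)]. }
  rewrite !fsum_plus, !fsum_scal.
  pose proof (fsum_var_list_flat u (fun i => cell_points (p i) (cs i)) l).
  pose proof (fsum_var_list_flat psi (fun i => tag_chain (xi i) (cs i)) l).
  pose proof (HTu _ HY1 HY2). pose proof (HTp _ HX1 HX2).
  unfold family_points, family_chains in *.
  assert ((eps0 + x) * fsum (fun i => var_list u (cell_points (p i) (cs i))) l <= (eps0 + x) * Tu)
    by (apply Rmult_le_compat_l; lra).
  assert ((eps0 + y) * fsum (fun i => var_list psi (tag_chain (xi i) (cs i))) l <= (eps0 + y) * Tpsi)
    by (apply Rmult_le_compat_l; lra).
  lra.
Qed.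

Lemma family_form_small f g a b : a <= b ->
  no_common_discontinuity f g a b -> (forall delta, 0 < delta -> approximable f g a b delta) ->
  forall eps, 0 < eps -> exists rho, 0 < rho /\ forall l p xi cs, cell_family a b l p xi cs ->
    (forall i, (i < l)%nat -> p (S i) - p i < rho) -> family_form l p xi cs f g <= eps.
Proof.
  intros Hab Hnc Happ eps He.
  destruct (Happ (eps / 3) ltac:(lra))
    as [psi [u [x [y [Tp [Tu [Hx [Hy [H1 [H2 [H3 [H4 [H5 H6]]]]]]]]]]]]].
  assert (Ha : points_in a b [a]) by (intros z [<-|[]]; lra).
  pose proof (H3 [a] I Ha) as HTp. pose proof (H4 [a] I Ha) as HTu. simpl in HTp, HTu.
  set (eps0 := eps / (3 * (Tu + Tp + 1))).
  assert (He0 : 0 < eps0) by (unfold eps0; apply Rdiv_lt_0_compat; lra).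
  destruct (small_oscillation f g a b Hnc eps0 He0) as [rho [Hrho Hosc]].
  exists rho. split; [exact Hrho|]. intros l p xi cs Hf Hm.
  eapply Rle_trans; [apply (family_form_split f g a b psi u x y Tp Tu eps0 rho); auto; lra|].
  pose proof (H6 _ _ _ (family_form_admissible a b l p xi cs Hf)).
  assert (eps0 * (Tu + Tp) <= eps / 3).
  { apply Rle_trans with (eps0 * (Tu + Tp + 1)); [apply Rmult_le_compat_l; lra|].
    right. unfold eps0. field. lra. }
  nra.
Qed.

Definition cells_of (t c : nat -> R) (s n : nat) : list (R * R) :=
  map (fun j => (t j, c (S j))) (seq s n).

Lemma cells_of_spec h w xi t c s n :
  cell_sum h w xi (c s) (cells_of t c s n) =
    fsum (fun j => (h (t (s + j)%nat) - h xi) * (w (c (S (s + j))) - w (c (s + j)%nat))) n /\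
  last_point (c s) (cells_of t c s n) = c (s + n)%nat /\
  ((forall j, (s <= j < s + n)%nat -> c j <= t j <= c (S j)) -> cells_ok (c s) (cells_of t c s n)).
Proof.
  revert s. induction n as [|n IH]; intros s; [simpl; rewrite Nat.add_0_r; auto|].
  unfold cells_of. simpl seq. simpl map. destruct (IH (S s)) as [I1 [I2 I3]].
  unfold cells_of in *. split; [|split].
  - cbn [cell_sum]. rewrite I1, fsum_shift, Nat.add_0_r. f_equal. apply fsum_ext. intros.
    replace (S s + i)%nat with (s + S i)%nat by lia. reflexivity.
  - simpl. rewrite I2. f_equal. lia.
  - intros H. simpl. split; [apply H; lia|apply I3; intros j Hj; apply H; lia].
Qed.

Lemma RS_sum_as_cell_sum f g l p nu xi :
  RS_sum f g l p nu - f xi * (g (p l) - g (p O)) =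
  cell_sum f g xi (p O) (cells_of (fun j => nu (S j)) p O l).
Proof.
  destruct (cells_of_spec f g xi (fun j => nu (S j)) p O l) as [-> _].
  unfold RS_sum. rewrite <- (fsum_telescope (fun i => g (p i)) l), <- fsum_scal, <- fsum_minus.
  apply fsum_ext. intros i _. simpl. ring.
Qed.

Definition strict_partition (a b : R) (l : nat) (p : nat -> R) : Prop :=
  p O = a /\ p l = b /\ forall i, (i < l)%nat -> p i < p (S i).

Definition tagged (l : nat) (p nu : nat -> R) : Prop :=
  forall i, (i < l)%nat -> p i <= nu (S i) <= p (S i).

Lemma strict_partition_partition a b l p : strict_partition a b l p -> partition a b l p.
Proof. intros [H1 [H2 H3]]. split; [exact H1|split; [exact H2|intros i Hi; specialize (H3 i Hi); lra]]. Qed.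

Definition clamp (p : nat -> R) (i : nat) (x : R) : R := Rmin (Rmax x (p i)) (p (S i)).

Lemma clamp_le p i x y : p i <= p (S i) -> x <= y -> clamp p i x <= clamp p i y.
Proof. intros H Hxy. unfold clamp, Rmin, Rmax. repeat destruct Rle_dec; lra. Qed.

Lemma clamp_below p i x : p i <= p (S i) -> x <= p i -> clamp p i x = p i.
Proof. intros H Hx. unfold clamp, Rmin, Rmax. repeat destruct Rle_dec; lra. Qed.

Lemma clamp_above p i x : p i <= p (S i) -> p (S i) <= x -> clamp p i x = p (S i).
Proof. intros H Hx. unfold clamp, Rmin, Rmax. repeat destruct Rle_dec; lra. Qed.

(** This is what makes the
    double sum in [RS_sum_difference] symmetric. *)
Lemma clamp_cases P P' Q Q' : P <= P' -> Q <= Q' ->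
  let cl := fun x => Rmin (Rmax x P) P' in let cl' := fun x => Rmin (Rmax x Q) Q' in
  (cl Q = cl' P /\ cl Q' = cl' P') \/ (cl Q = cl Q' /\ cl' P = cl' P').
Proof.
  intros H1 H2 cl cl'. unfold cl, cl', Rmin, Rmax.
  repeat destruct Rle_dec; first [left; split; lra | right; split; lra].
Qed.

(** The cells of the common refinement of [p] and [q] inside the [i]-th cell of [p],
    each tagged at its left end point. *)
Definition refined_cells (p q : nat -> R) (l' : nat) (i : nat) : list (R * R) :=
  cells_of (fun j => clamp p i (q j)) (fun j => clamp p i (q j)) O l'.

Lemma refined_cells_spec a b f g l p l' q i xi :
  strict_partition a b l p -> strict_partition a b l' q -> (i < l)%nat ->
  cells_ok (p i) (refined_cells p q l' i) /\ last_point (p i) (refined_cells p q l' i) = p (S i) /\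
  cell_sum f g xi (p i) (refined_cells p q l' i) =
    fsum (fun j => f (clamp p i (q j)) * (g (clamp p i (q (S j))) - g (clamp p i (q j)))) l' -
    f xi * (g (p (S i)) - g (p i)).
Proof.
  intros Hp Hq Hi. pose proof (strict_partition_partition _ _ _ _ Hp) as Hp'.
  pose proof (strict_partition_partition _ _ _ _ Hq) as Hq'.
  pose proof (partition_in a b l p i Hp' ltac:(lia)). pose proof (partition_in a b l p (S i) Hp' ltac:(lia)).
  assert (Hpi : p i <= p (S i)) by (apply (proj2 (proj2 Hp')); exact Hi).
  assert (E0 : clamp p i (q O) = p i) by (apply clamp_below; [exact Hpi|destruct Hq as [-> _]; lra]).
  assert (E1 : clamp p i (q l') = p (S i)) by (apply clamp_above; [exact Hpi|destruct Hq as [_ [-> _]]; lra]).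
  destruct (cells_of_spec f g xi (fun j => clamp p i (q j)) (fun j => clamp p i (q j)) O l')
    as [H1 [H2 H3]].
  unfold refined_cells. rewrite E0 in H1, H2, H3. split; [|split].
  - apply H3. intros j Hj. split; [lra|]. apply clamp_le; [exact Hpi|].
    apply (proj2 (proj2 Hq')). lia.
  - rewrite H2. exact E1.
  - pose proof (fsum_telescope (fun j => g (clamp p i (q j))) l') as T.
    cbv beta in T. rewrite E1, E0 in T.
    rewrite H1, <- T, <- fsum_scal, <- fsum_minus. apply fsum_ext. intros j _. simpl. ring.
Qed.

Lemma RS_sum_difference a b f g l p nu l' q mu :
  strict_partition a b l p -> strict_partition a b l' q ->
  RS_sum f g l p nu - RS_sum f g l' q mu =
  fsum (fun j => cell_sum f g (mu (S j)) (q j) (refined_cells q p l j)) l' -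
  fsum (fun i => cell_sum f g (nu (S i)) (p i) (refined_cells p q l' i)) l.
Proof.
  intros Hp Hq.
  rewrite (fsum_ext (fun j => cell_sum f g (mu (S j)) (q j) (refined_cells q p l j))
    (fun j => fsum (fun i => f (clamp q j (p i)) * (g (clamp q j (p (S i))) - g (clamp q j (p i)))) l -
              f (mu (S j)) * (g (q (S j)) - g (q j))) l')
    by (intros j Hj; apply (refined_cells_spec a b f g l' q l p j); auto).
  rewrite (fsum_ext (fun i => cell_sum f g (nu (S i)) (p i) (refined_cells p q l' i))
    (fun i => fsum (fun j => f (clamp p i (q j)) * (g (clamp p i (q (S j))) - g (clamp p i (q j)))) l' -
              f (nu (S i)) * (g (p (S i)) - g (p i))) l)
    by (intros i Hi; apply (refined_cells_spec a b f g l p l' q i); auto).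
  rewrite !fsum_minus. unfold RS_sum.
  assert (E : fsum (fun i => fsum (fun j => f (clamp p i (q j)) *
                (g (clamp p i (q (S j))) - g (clamp p i (q j)))) l') l =
              fsum (fun j => fsum (fun i => f (clamp q j (p i)) *
                (g (clamp q j (p (S i))) - g (clamp q j (p i)))) l) l').
  { rewrite fsum_swap. apply fsum_ext. intros j Hj. apply fsum_ext. intros i Hi.
    assert (H1 : p i <= p (S i)) by (destruct Hp as [_ [_ H]]; specialize (H i Hi); lra).
    assert (H2 : q j <= q (S j)) by (destruct Hq as [_ [_ H]]; specialize (H j Hj); lra).
    destruct (clamp_cases (p i) (p (S i)) (q j) (q (S j)) H1 H2) as [[E1 E2]|[E1 E2]];
      unfold clamp; simpl in E1, E2.
    - rewrite E1, E2. reflexivity.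
    - rewrite E1, E2, !Rminus_diag. ring. }
  rewrite E. ring.
Qed.

Lemma RS_sum_cauchy a b f g : a <= b -> no_common_discontinuity f g a b ->
  (forall delta, 0 < delta -> approximable f g a b delta) ->
  forall eps, 0 < eps -> exists rho, 0 < rho /\ forall l p nu l' q mu,
    strict_partition a b l p -> strict_partition a b l' q -> tagged l p nu -> tagged l' q mu ->
    (forall i, (i < l)%nat -> p (S i) - p i < rho) -> (forall j, (j < l')%nat -> q (S j) - q j < rho) ->
    Rabs (RS_sum f g l p nu - RS_sum f g l' q mu) <= eps.
Proof.
  intros Hab Hnc Happ eps He.
  destruct (family_form_small f g a b Hab Hnc Happ (eps / 2) ltac:(lra)) as [rho [Hrho H]].
  exists rho. split; [exact Hrho|]. intros l p nu l' q mu Hp Hq Hnu Hmu Hmp Hmq.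
  rewrite (RS_sum_difference a b f g l p nu l' q mu Hp Hq).
  assert (F1 : cell_family a b l p (fun i => nu (S i)) (refined_cells p q l')).
  { split; [apply strict_partition_partition; exact Hp|]. intros i Hi.
    destruct (refined_cells_spec a b f g l p l' q i 0 Hp Hq Hi) as [H1 [H2 _]]. auto. }
  assert (F2 : cell_family a b l' q (fun j => mu (S j)) (refined_cells q p l)).
  { split; [apply strict_partition_partition; exact Hq|]. intros j Hj.
    destruct (refined_cells_spec a b f g l' q l p j 0 Hq Hp Hj) as [H1 [H2 _]]. auto. }
  pose proof (H _ _ _ _ F1 Hmp). pose proof (H _ _ _ _ F2 Hmq). unfold family_form in *.
  pose proof (fsum_abs (fun j => cell_sum f g (mu (S j)) (q j) (refined_cells q p l j)) l').
  pose proof (fsum_abs (fun i => cell_sum f g (nu (S i)) (p i) (refined_cells p q l' i)) l).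
  unfold Rminus. eapply Rle_trans; [apply Rabs_triang|rewrite Rabs_Ropp; lra].
Qed.

(** [RS_sum] tags the cell [[p i, p (S i)]] by [nu (S i)]; uniform partitions are tagged at
    left end points. *)
Definition uniform_point (a b : R) (n j : nat) : R := a + INR j * ((b - a) / INR (S n)).
Definition uniform_tag (a b : R) (n k : nat) : R := uniform_point a b n (pred k).
Definition uniform_RS (f g : R -> R) (a b : R) (n : nat) : R :=
  RS_sum f g (S n) (uniform_point a b n) (uniform_tag a b n).

Lemma uniform_partition_spec a b n : a < b ->
  strict_partition a b (S n) (uniform_point a b n) /\ tagged (S n) (uniform_point a b n) (uniform_tag a b n) /\
  forall i, uniform_point a b n (S i) - uniform_point a b n i = (b - a) / INR (S n).
Proof.
  intros Hab. assert (HN : 0 < INR (S n)) by (apply lt_0_INR; lia).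
  assert (Hw : 0 < (b - a) / INR (S n)) by (apply Rdiv_lt_0_compat; lra).
  assert (Hd : forall i, uniform_point a b n (S i) - uniform_point a b n i = (b - a) / INR (S n))
    by (intros i; unfold uniform_point; rewrite S_INR; ring).
  split; [|split; [|exact Hd]].
  - split; [unfold uniform_point; simpl; ring|split; [unfold uniform_point; field; lra|]].
    intros i _. specialize (Hd i). lra.
  - intros i _. unfold uniform_tag. simpl. specialize (Hd i). lra.
Qed.

Lemma RS_integral_exists a b f g : a < b -> no_common_discontinuity f g a b ->
  (forall delta, 0 < delta -> approximable f g a b delta) ->
  exists I, is_RS_integral f g a b I /\ Un_cv (uniform_RS f g a b) I.
Proof.
  intros Hab Hnc Happ.
  pose proof (RS_sum_cauchy a b f g ltac:(lra) Hnc Happ) as Hc.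
  assert (Hfine : forall rho, 0 < rho -> exists N, forall n, (N <= n)%nat ->
            forall i, uniform_point a b n (S i) - uniform_point a b n i < rho).
  { intros rho Hrho. destruct (uniform_mesh_small a b rho Hab Hrho) as [N HN].
    exists N. intros n Hn i. destruct (uniform_partition_spec a b n Hab) as [_ [_ ->]]. auto. }
  assert (Hcauchy : Cauchy_crit (uniform_RS f g a b)).
  { intros eps He. destruct (Hc (eps / 2) ltac:(lra)) as [rho [Hrho H]].
    destruct (Hfine rho Hrho) as [N HN]. exists N. intros n m Hn Hm.
    destruct (uniform_partition_spec a b n Hab) as [P1 [P2 _]].
    destruct (uniform_partition_spec a b m Hab) as [Q1 [Q2 _]].
    unfold Rdist, uniform_RS. eapply Rle_lt_trans; [apply H; auto; intros; apply HN; auto|lra]. }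
  destruct (Rcomplete.R_complete _ Hcauchy) as [I HI].
  exists I. split; [|exact HI].
  intros eps He. destruct (Hc (eps / 2) ltac:(lra)) as [rho [Hrho H]].
  exists rho. split; [exact Hrho|]. intros l p nu Hp0 Hpl Hinc Hmesh Htag.
  destruct (HI (eps / 2) ltac:(lra)) as [N1 HN1]. destruct (Hfine rho Hrho) as [N2 HN2].
  set (n := Nat.max N1 N2). destruct (uniform_partition_spec a b n Hab) as [P1 [P2 _]].
  assert (Rabs (RS_sum f g l p nu - uniform_RS f g a b n) <= eps / 2)
    by (apply H; auto; [split; auto|intros; apply HN2; unfold n; lia]).
  specialize (HN1 n ltac:(unfold n; lia)). unfold Rdist in HN1.
  replace (RS_sum f g l p nu - I) with ((RS_sum f g l p nu - uniform_RS f g a b n) + (uniform_RS f g a b n - I)) by ring.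
  eapply Rle_lt_trans; [apply Rabs_triang|lra].
Qed.

Lemma uniform_RS_as_cell_sum f g a b xi n : a < b -> exists cs,
  uniform_RS f g a b n - f xi * (g b - g a) = cell_sum f g xi a cs /\
  cells_ok a cs /\ last_point a cs = b.
Proof.
  intros Hab. set (p := uniform_point a b n).
  destruct (uniform_partition_spec a b n Hab) as [[H0 [H1 _]] [Ht _]]. fold p in H0, H1, Ht.
  destruct (cells_of_spec f g xi (fun j => uniform_tag a b n (S j)) p O (S n)) as [_ [L V]].
  exists (cells_of (fun j => uniform_tag a b n (S j)) p O (S n)).
  rewrite H0 in L, V. split; [|split].
  - pose proof (RS_sum_as_cell_sum f g (S n) p (uniform_tag a b n) xi) as E.
    rewrite H0, H1 in E. exact E.
  - apply V. intros j Hj. apply Ht. lia.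
  - rewrite L. exact H1.
Qed.

Lemma single_cell_family a b xi cs : a <= b -> cells_ok a cs -> last_point a cs = b -> a <= xi <= b ->
  cell_family a b 1 (fun i => match i with O => a | _ => b end) (fun _ => xi) (fun _ => cs).
Proof.
  intros Hab Hv Hl Hxi. split; [split; [reflexivity|split; [reflexivity|intros [|i] Hi; [exact Hab|lia]]]|].
  intros [|i] Hi; [|lia]. auto.
Qed.

Lemma cell_sum_le_twice_S f g a b c c' xi cs eta theta s :
  a <= b -> cells_ok a cs -> last_point a cs = b -> a <= xi <= b ->
  nonincr_to_zero eta -> nonincr_to_zero theta ->
  S_series f g a b c eta theta = Finite s \/ S_series g f a b c' theta eta = Finite s ->
  Rabs (cell_sum f g xi a cs) <= 2 * s.
Proof.
  intros Hab Hv Hl Hxi Heta Htheta Hs.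
  pose proof (family_form_admissible a b 1 _ _ _ (single_cell_family a b xi cs Hab Hv Hl Hxi)) as Hadm.
  set (Phi := family_form 1 (fun i => match i with O => a | _ => b end) (fun _ => xi) (fun _ => cs)) in Hadm.
  assert (E : Phi f g = Rabs (cell_sum f g xi a cs)) by (unfold Phi, family_form; simpl; ring).
  rewrite <- E. destruct Hs as [Hs|Hs].
  - exact (Phi_le_twice_S f g a b c eta theta Phi _ _ s Hab Heta Htheta Hadm Hs).
  - exact (Phi_le_twice_S g f a b c' theta eta (fun h w => Phi w h) _ _ s Hab Htheta Heta
             (admissible_transpose _ _ _ _ _ Hadm) Hs).
Qed.

Lemma Un_cv_abs_le (v : nat -> R) I A B :
  Un_cv v I -> (forall n, Rabs (v n - A) <= B) -> Rabs (I - A) <= B.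
Proof.
  intros HI HB. apply le_epsilon. intros eps He. destruct (HI eps He) as [N HN].
  specialize (HN N (le_n _)). specialize (HB N). unfold Rdist in HN.
  replace (I - A) with ((I - v N) + (v N - A)) by ring.
  eapply Rle_trans; [apply Rabs_triang|rewrite Rabs_minus_sym; lra].
Qed.

Lemma le_twice_Rbar_min A S St :
  Rbar_le 0 S -> Rbar_le 0 St -> (Rbar_lt S p_infty \/ Rbar_lt St p_infty) ->
  (forall s, S = Finite s -> A <= 2 * s) -> (forall t, St = Finite t -> A <= 2 * t) ->
  Rbar_le (Finite A) (Rbar_mult (Finite 2) (Rbar_min S St)).
Proof.
  intros H0 H0' HS H1 H2.
  destruct S as [s| |]; destruct St as [t| |]; simpl in *; try contradiction.
  - specialize (H1 s eq_refl). specialize (H2 t eq_refl). unfold Rmin. destruct (Rle_dec s t); lra.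
  - exact (H1 s eq_refl).
  - exact (H2 t eq_refl).
  - destruct HS; contradiction.
Qed.

Theorem corollary1 (a b : R) (f g : R -> R) (xi : R) (eta theta : nat -> R) :
  a < b ->
  regulated f a b -> regulated g a b ->
  no_common_discontinuity f g a b ->
  a <= xi <= b ->
  nonincr_to_zero eta -> nonincr_to_zero theta ->
  let eta_m1 := sup_dev f a b a in
  let theta_m1 := sup_dev g a b b in
  let S := Rbar_plus (wsum (shift_seq eta_m1 eta) g a b theta)
                     (wsum (fun k => Finite (theta k)) f a b eta) in
  let St := Rbar_plus (wsum (shift_seq theta_m1 theta) f a b eta)
                      (wsum (fun k => Finite (eta k)) g a b theta) in
  (Rbar_lt S p_infty \/ Rbar_lt St p_infty) ->
  exists I : R, is_RS_integral f g a b I /\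
    Rbar_le (Finite (Rabs (I - f xi * (g b - g a))))
            (Rbar_mult (Finite 2) (Rbar_min S St)).
Proof.
  intros Hab Hf Hg Hnc Hxi Heta Htheta eta_m1 theta_m1 S St HS.
  change S with (S_series f g a b a eta theta) in *.
  change St with (S_series g f a b b theta eta) in *.
  assert (Happ : forall delta, 0 < delta -> approximable f g a b delta).
  { destruct HS as [HS|HS].
    - exact (approximable_of_S_finite f g a b a eta theta Hab Hf Hg Heta Htheta HS).
    - intros delta Hd. apply approximable_transpose.
      exact (approximable_of_S_finite g f a b b theta eta Hab Hg Hf Htheta Heta HS delta Hd). }
  destruct (RS_integral_exists a b f g Hab Hnc Happ) as [I [HI Hlim]].
  exists I. split; [exact HI|].
  assert (Hbound : forall s, S_series f g a b a eta theta = Finite s \/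
                             S_series g f a b b theta eta = Finite s ->
                   Rabs (I - f xi * (g b - g a)) <= 2 * s).
  { intros s Hs. apply (Un_cv_abs_le _ I _ _ Hlim). intros n.
    destruct (uniform_RS_as_cell_sum f g a b xi n Hab) as [cs [-> [Hv Hl]]].
    apply (cell_sum_le_twice_S f g a b a b xi cs eta theta s); auto; lra. }
  apply le_twice_Rbar_min; try apply S_series_nonneg; auto.
Qed.
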